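(* Let $k \ge 1$ and $\theta = 2\pi/(4k+4)$, and let $R = 1 + \dfrac{2\sin(\theta/2)}{\cos(\theta/2) - \sin(\theta/2)}$. For every finite point set $P$ in general position and every $u, w \in P$, the path produced by $\theta$-routing from $u$ to $w$ in the $\theta_{4k+4}$-graph on $P$ has length at most $R\,|uw|$. Moreover the bound is tight: for every $\varepsilon > 0$ there exist $P$ and $u,w\in P$ for which the $\theta$-routing path from $u$ to $w$ has length at least $(R-\varepsilon)|uw|$.
   Context: Cones: for $m \ge 2$, $\theta = 2\pi/m$; around each point $u$ draw $m$ rays with consecutive angular separation $\theta$, oriented so the vertical upward ray from $u$ bisects a cone $C_0^u$; cones numbered clockwise, same orientation at every point. General position: no two points on a line parallel to a cone boundary ray, no two on a line perpendicular to a cone bisector, no three collinear. The $\theta_m$-graph on $P$: for each $u\in P$ and each cone $C_i^u$ containing another point of $P$, add an edge from $u$ to the point of $C_i^u$ whose orthogonal projection onto the bisector of $C_i^u$ is closest to $u$; edges weighted by Euclidean length. $\theta$-routing with destination $t$: at the current vertex $x$, if $xt$ is an edge of the graph, follow it; otherwise follow the edge from $x$ in the cone of $x$ that contains $t$ (i.e. to the closest vertex in that cone, measured by projection onto its bisector). *)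

From Stdlib Require Import Reals Lra List.
Import ListNotations.
Open Scope R_scope.

Definition point := (R * R)%type.

Definition pdist (p q : point) : R :=
  sqrt ((fst q - fst p) ^ 2 + (snd q - snd p) ^ 2).

Definition dot (a b : point) : R := fst a * fst b + snd a * snd b.
Definition cross (a b : point) : R := fst a * snd b - snd a * fst b.
Definition vsub (q p : point) : point := (fst q - fst p, snd q - snd p).

Definition theta (m : nat) : R := 2 * PI / INR m.

(* unit direction obtained by rotating the upward vector (0,1) clockwise by a *)
Definition dir (a : R) : point := (sin a, cos a).

(* bisector of cone C_i (cones numbered clockwise, C_0 bisected by upward ray) *)
Definition bisector (m i : nat) : point := dir (INR i * theta m).

(* v lies in (the interior of) cone C_i^u: angle between v-u and the bisector
   is less than theta/2.  Boundary rays are irrelevant under general position. *)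
Definition in_cone (m : nat) (u : point) (i : nat) (v : point) : Prop :=
  (i < m)%nat /\ v <> u /\
  dot (vsub v u) (bisector m i) > pdist u v * cos (theta m / 2).

Definition proj (m : nat) (u : point) (i : nat) (v : point) : R :=
  dot (vsub v u) (bisector m i).

Definition general_position (m : nat) (P : list point) : Prop :=
  (* no two points on a line parallel to a cone boundary ray *)
  (forall u v j, In u P -> In v P -> u <> v -> (j < m)%nat ->
     cross (vsub v u) (dir ((2 * INR j + 1) * theta m / 2)) <> 0) /\
  (forall u v i, In u P -> In v P -> u <> v -> (i < m)%nat ->
     dot (vsub v u) (bisector m i) <> 0) /\
  (forall u v w, In u P -> In v P -> In w P -> u <> v -> u <> w -> v <> w ->
     cross (vsub v u) (vsub w u) <> 0).

Definition closest (P : list point) (m : nat) (u : point) (i : nat) (v : point) : Prop :=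
  In v P /\ in_cone m u i v /\
  forall w, In w P -> in_cone m u i w -> proj m u i v <= proj m u i w.

Definition theta_edge (P : list point) (m : nat) (u v : point) : Prop :=
  exists i, closest P m u i v \/ closest P m v i u.

Definition route_step (P : list point) (m : nat) (t x y : point) : Prop :=
  (theta_edge P m x t /\ y = t) \/
  (~ theta_edge P m x t /\ exists i, in_cone m x i t /\ closest P m x i y).

Inductive routing_path (P : list point) (m : nat) (t : point) : point -> list point -> Prop :=
| rp_done : routing_path P m t t [t]
| rp_step : forall x y l, x <> t -> route_step P m t x y ->
    routing_path P m t y l -> routing_path P m t x (x :: l).

Fixpoint path_length (l : list point) : R :=
  match l with
  | x :: ((y :: _) as l') => pdist x y + path_length l'
  | _ => 0
  end.

Definition ratio_R (m : nat) : R :=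
  1 + 2 * sin (theta m / 2) / (cos (theta m / 2) - sin (theta m / 2)).

(* Write h = theta / 2 and, for a vector v and a cone index i, let L_i(v) be the
   l1-norm of v in the orthonormal frame of the bisector of cone i.  If v lies in
   cone i then L_i(v) is the least of the L_j(v) (turning the frame by a multiple
   of theta cannot lower it) and L_i(v) <= (cos h + sin h) |v|.  Take as potential
   of the current vertex x the least L_j(t - x).  A routing step x -> y goes into
   the cone of x containing t, to a point y not beyond t along the bisector; in
   the frame of that cone this lowers the potential by at least
   (cos h - sin h) |xy|.  Hence routing terminates and has length at most
   (cos h + sin h) / (cos h - sin h) |ut| = R |ut|.

   For tightness, place points on a staircase converging to t, alternating
   between two perpendicular cone directions with step lengths shrinking by the
   factor sin theta, each step running almost along a cone boundary, where the
   potential drops only by (cos h - sin h) per unit length; the sum of the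
   geometric series of step lengths is then close to R |ut|.  Moving the points
   along polynomial curves puts them in general position without changing any of
   the finitely many strict inequalities that decide the route. *)
From Stdlib Require Import Reals List Lra Lia Psatz ZArith Zfloor Classical.
Import ListNotations.
Open Scope R_scope.

Definition vnorm (v : point) : R := sqrt (fst v ^ 2 + snd v ^ 2).

Definition perp_dir (a : R) : point := (cos a, - sin a).
Definition frame_l1 (a : R) (v : point) : R :=
  Rabs (dot v (dir a)) + Rabs (dot v (perp_dir a)).

Lemma pdist_vnorm (u v : point) : pdist u v = vnorm (vsub v u).
Proof. reflexivity. Qed.

Lemma sqrt_le_of_sq_le (x y : R) : 0 <= y -> x <= y * y -> sqrt x <= y.
Proof. intros Hy H. rewrite <- (sqrt_square y) by exact Hy. apply sqrt_le_1_alt; exact H. Qed.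

Lemma le_sqrt_of_sq_le (x y : R) : 0 <= y -> y * y <= x -> y <= sqrt x.
Proof. intros Hy H. rewrite <- (sqrt_square y) by exact Hy. apply sqrt_le_1_alt; exact H. Qed.

Lemma Rabs_le_of_sq_le (x y : R) : 0 <= y -> x * x <= y * y -> Rabs x <= y.
Proof. intros Hy H. unfold Rabs; destruct (Rcase_abs x); nra. Qed.

Lemma Rabs_mul_self (x : R) : Rabs x * Rabs x = x * x.
Proof. unfold Rabs; destruct (Rcase_abs x); nra. Qed.

Lemma vnorm_ge0 (v : point) : 0 <= vnorm v.
Proof. apply sqrt_pos. Qed.

Lemma vnorm_sq (v : point) : vnorm v * vnorm v = fst v ^ 2 + snd v ^ 2.
Proof. unfold vnorm. apply sqrt_sqrt. nra. Qed.

Lemma vnorm_sq_frame (a : R) (v : point) :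
  vnorm v * vnorm v = dot v (dir a) ^ 2 + dot v (perp_dir a) ^ 2.
Proof.
  rewrite vnorm_sq. unfold dot, dir, perp_dir; simpl.
  pose proof (sin2_cos2 a) as H. unfold Rsqr in H.
  transitivity ((fst v ^ 2 + snd v ^ 2) * (sin a * sin a + cos a * cos a));
    [rewrite H; ring | ring].
Qed.

Lemma vnorm_vsub_pos (y x : point) : y <> x -> 0 < vnorm (vsub y x).
Proof.
  intros H. unfold vnorm, vsub; simpl. apply sqrt_lt_R0.
  destruct y as [y1 y2], x as [x1 x2]; simpl.
  pose proof (pow2_ge_0 (y1 - x1)); pose proof (pow2_ge_0 (y2 - x2)).
  destruct (Req_dec y1 x1) as [E1|E1].
  - assert (E2 : y2 - x2 <> 0) by (intro; apply H; f_equal; lra).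
    assert (0 < (y2 - x2) ^ 2) by (rewrite <- Rsqr_pow2; apply Rlt_0_sqr; exact E2). lra.
  - assert (E : y1 - x1 <> 0) by (intro; apply E1; lra).
    assert (0 < (y1 - x1) ^ 2) by (rewrite <- Rsqr_pow2; apply Rlt_0_sqr; exact E). lra.
Qed.

Lemma vnorm_le_frame_l1 (a : R) (v : point) : vnorm v <= frame_l1 a v.
Proof.
  assert (E : fst v ^ 2 + snd v ^ 2 = dot v (dir a) ^ 2 + dot v (perp_dir a) ^ 2)
    by (rewrite <- vnorm_sq; apply vnorm_sq_frame).
  unfold frame_l1, vnorm. rewrite E.
  pose proof (Rabs_pos (dot v (dir a))); pose proof (Rabs_pos (dot v (perp_dir a))).
  apply sqrt_le_of_sq_le; [lra|].
  rewrite <- (pow2_abs (dot v (dir a))), <- (pow2_abs (dot v (perp_dir a))). nra.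
Qed.

Lemma dot_vsub_split (w y x b : point) :
  dot (vsub w y) b = dot (vsub w x) b - dot (vsub y x) b.
Proof. unfold dot, vsub; simpl; ring. Qed.

Lemma dot_dir_add (a phi : R) (v : point) :
  dot v (dir (a + phi)) = dot v (dir a) * cos phi + dot v (perp_dir a) * sin phi.
Proof. unfold dot, dir, perp_dir; simpl. rewrite sin_plus, cos_plus. ring. Qed.

Lemma dot_perp_dir_add (a phi : R) (v : point) :
  dot v (perp_dir (a + phi)) = dot v (perp_dir a) * cos phi - dot v (dir a) * sin phi.
Proof. unfold dot, dir, perp_dir; simpl. rewrite sin_plus, cos_plus. ring. Qed.

Section ConeFrame.
Variables (co s P Q r : R).
Hypotheses (Hcs : co * co + s * s = 1) (Hs : 0 < s) (Hr : 0 <= r)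
  (Hrr : r * r = P ^ 2 + Q ^ 2).

Lemma cone_lateral_bound : 0 <= co -> P > r * co -> Rabs Q <= r * s.
Proof. intros Hco HP. assert (0 <= r * co) by nra. apply Rabs_le_of_sq_le; nra. Qed.

Lemma cone_iff_lateral : 0 < co ->
  (P > r * co <-> (0 < P /\ co * Rabs Q < s * P)).
Proof.
  intros Hco. pose proof (Rabs_pos Q) as HQ. pose proof (Rabs_mul_self Q) as EQ.
  assert (Es : s * s = 1 - co * co) by lra.
  split.
  - intros HP. assert (0 <= r * co) by nra.
    split; [lra|].
    assert (P * P > (r * co) * (r * co)) by nra.
    assert ((co * Rabs Q) * (co * Rabs Q) < (s * P) * (s * P)).
    { replace ((co * Rabs Q) * (co * Rabs Q)) with (co * co * (Q * Q)) by (rewrite <- EQ; ring).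
      replace ((s * P) * (s * P)) with (P * P * (s * s)) by ring. rewrite Es. nra. }
    destruct (Rlt_dec (co * Rabs Q) (s * P)) as [|Hn]; [assumption|].
    assert (0 < s * P) by nra.
    assert (s * P * (s * P) <= (co * Rabs Q) * (co * Rabs Q)) by (apply Rmult_le_compat; lra).
    lra.
  - intros [HP HQs].
    assert (0 <= co * Rabs Q) by nra.
    assert (Hsq : (co * Rabs Q) * (co * Rabs Q) < (s * P) * (s * P)) by nra.
    replace ((co * Rabs Q) * (co * Rabs Q)) with (co * co * (Q * Q)) in Hsq by (rewrite <- EQ; ring).
    assert ((r * co) * (r * co) < P * P) by nra.
    destruct (Rle_dec P (r * co)); [|lra]. nra.
Qed.

(* Equality holds on the boundary rays of the cone. *)
Lemma cone_frame_l1_bound : s <= co -> P > r * co -> Rabs P + Rabs Q <= (co + s) * r.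
Proof.
  intros Hsc HP.
  assert (HP0 : 0 <= r * co) by nra.
  rewrite (Rabs_pos_eq P) by lra.
  set (A := Rabs Q). assert (HA : 0 <= A) by apply Rabs_pos.
  assert (HAQ : A * A = Q * Q) by apply Rabs_mul_self.
  assert (HPp : P + r * co > 0) by lra.
  assert (H1 : P * P >= r * r * (co * co)).
  { assert ((P - r * co) * (P + r * co) >= 0) by (apply Rle_ge; apply Rmult_le_pos; lra). nra. }
  assert (Hc2 : 2 * (co * co) >= 1) by nra.
  assert (H2 : P * P + r * r * (co * co) >= r * r).
  { assert (r * r * (2 * (co * co)) >= r * r * 1)
      by (apply Rle_ge; apply Rmult_le_compat_l; nra).
    nra. }
  assert (H3 : (P * A) * (P * A) <= (r * r * co * s) * (r * r * co * s)).
  { assert (E : (P * A) * (P * A) = (P * P) * (r * r - P * P)).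
    { transitivity ((P * P) * (A * A)); [ring|]. rewrite HAQ, Hrr; ring. }
    rewrite E.
    assert ((P * P - r * r * (co * co)) * (r * r - P * P - r * r * (co * co)) <= 0) by nra.
    assert (s * s = 1 - co * co) by lra.
    nra. }
  assert (H4 : P * A <= r * r * co * s).
  { apply Rabs_le_of_sq_le in H3; [|nra]. rewrite Rabs_pos_eq in H3 by nra. exact H3. }
  assert (H5 : (P + A) * (P + A) <= ((co + s) * r) * ((co + s) * r)) by nra.
  apply Rabs_le_of_sq_le in H5; [|nra]. rewrite Rabs_pos_eq in H5 by nra. exact H5.
Qed.

End ConeFrame.

Lemma frame_l1_step (a co s : R) (x y w : point) :
  co * co + s * s = 1 -> 0 < s -> 0 <= co ->
  dot (vsub y x) (dir a) > vnorm (vsub y x) * co ->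
  dot (vsub y x) (dir a) <= dot (vsub w x) (dir a) ->
  (co - s) * vnorm (vsub y x) + frame_l1 a (vsub w y) <= frame_l1 a (vsub w x).
Proof.
  intros Hcs Hs Hco Hin Hpr.
  pose proof (vnorm_ge0 (vsub y x)) as Hr.
  pose proof (cone_lateral_bound co s _ (dot (vsub y x) (perp_dir a)) _ Hcs Hs Hr
      (vnorm_sq_frame a _) Hco Hin) as HQ.
  unfold frame_l1. rewrite (dot_vsub_split w y x (dir a)), (dot_vsub_split w y x (perp_dir a)).
  set (Pe := dot (vsub y x) (dir a)) in *. set (Pd := dot (vsub w x) (dir a)) in *.
  set (Qe := dot (vsub y x) (perp_dir a)) in *. set (Qd := dot (vsub w x) (perp_dir a)) in *.
  assert (HPe : 0 <= Pe) by nra.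
  rewrite (Rabs_pos_eq (Pd - Pe)) by lra. rewrite (Rabs_pos_eq Pd) by lra.
  pose proof (Rabs_triang Qd (- Qe)) as Htri. rewrite Rabs_Ropp in Htri.
  unfold Rminus at 3. nra.
Qed.

Definition half_theta (k : nat) : R := PI / (4 * (INR k + 1)).

Lemma INR_cone_count (k : nat) : INR (4 * k + 4) = 4 * (INR k + 1).
Proof. rewrite plus_INR, mult_INR. simpl. ring. Qed.

Lemma theta_eq (k : nat) : theta (4 * k + 4) = 2 * half_theta k.
Proof. unfold theta, half_theta. rewrite INR_cone_count. field. pose proof (pos_INR k). lra. Qed.

Lemma cone_count_full_turn (k : nat) : INR (4 * k + 4) * (2 * half_theta k) = 2 * PI.
Proof. rewrite INR_cone_count. unfold half_theta. field. pose proof (pos_INR k). lra. Qed.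

Lemma half_theta_bounds (k : nat) : (1 <= k)%nat -> 0 < half_theta k /\ 4 * half_theta k <= PI / 2.
Proof.
  intros Hk. unfold half_theta. pose proof PI_RGT_0.
  assert (HK : 1 <= INR k) by (apply (le_INR 1); exact Hk).
  split; [apply Rdiv_lt_0_compat; lra|].
  replace (4 * (PI / (4 * (INR k + 1)))) with (PI / (INR k + 1)) by (field; lra).
  apply Rmult_le_reg_r with (INR k + 1); [lra|].
  unfold Rdiv. rewrite Rmult_assoc, Rinv_l by lra. nra.
Qed.

Lemma cos_sin_half_theta (k : nat) : (1 <= k)%nat ->
  let co := cos (half_theta k) in let s := sin (half_theta k) in
  co * co + s * s = 1 /\ 0 < s /\ s < co.
Proof.
  intros Hk co s. destruct (half_theta_bounds k Hk) as [H0 H4]. pose proof PI_RGT_0.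
  pose proof (sin2_cos2 (half_theta k)) as E; unfold Rsqr in E.
  assert (Hs : 0 < s) by (apply sin_gt_0; lra).
  assert (HcT : 0 < cos (2 * half_theta k)) by (apply cos_gt_0; lra).
  rewrite cos_2a in HcT.
  assert (Hc : 0 < co) by (apply cos_gt_0; lra).
  unfold co, s in *. repeat split; nra.
Qed.

Lemma sin_ge_of_between (T y : R) :
  0 < T -> T <= PI / 2 -> T <= y -> y <= PI - T -> sin T <= sin y.
Proof.
  intros H0 H1 H2 H3. pose proof PI_RGT_0.
  destruct (Rle_dec y (PI / 2)) as [Hy|Hy].
  - apply sin_incr_1; lra.
  - rewrite <- (sin_PI_x y). apply sin_incr_1; lra.
Qed.

(* [4 half_theta k = pi / (k + 1)]: a multiple of it is a multiple of [pi] or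
   has distance at least [4 half_theta k] from every multiple of [pi]. *)
Lemma sin_multiple_bound (k : nat) (n : Z) : (1 <= k)%nat ->
  let T := 4 * half_theta k in
  sin (IZR n * T) = 0 \/ sin T <= Rabs (sin (IZR n * T)).
Proof.
  intros Hk T. pose proof PI_RGT_0.
  assert (HK : 1 <= INR k) by (apply (le_INR 1); exact Hk).
  assert (HTT : T * (INR k + 1) = PI) by (unfold T, half_theta; field; lra).
  destruct (half_theta_bounds k Hk) as [HT0 HT2]. fold T in HT2.
  set (K := Z.of_nat (k + 1)).
  assert (HKpos : (0 < K)%Z) by (unfold K; lia).
  assert (HKR : IZR K = INR k + 1) by (unfold K; rewrite <- INR_IZR_INZ, plus_INR; simpl; ring).
  pose proof (Z.div_mod n K ltac:(lia)) as Hdm.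
  pose proof (Z.mod_pos_bound n K HKpos) as Hb.
  set (q := (n / K)%Z) in *. set (r := (n mod K)%Z) in *.
  assert (En : IZR n * T = IZR q * PI + IZR r * T).
  { rewrite Hdm at 1. rewrite plus_IZR, mult_IZR, HKR, <- HTT. ring. }
  assert (Sq : sin (IZR q * PI) = 0) by (apply sin_eq_0_1; exists q; reflexivity).
  assert (Cq : Rabs (cos (IZR q * PI)) = 1).
  { pose proof (sin2_cos2 (IZR q * PI)) as E; unfold Rsqr in E. rewrite Sq in E.
    unfold Rabs; destruct (Rcase_abs (cos (IZR q * PI))); nra. }
  rewrite En, sin_plus, Sq, Rmult_0_l, Rplus_0_l.
  destruct (Z.eq_dec r 0) as [Hr0|Hr0].
  - left. rewrite Hr0, Rmult_0_l, sin_0. ring.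
  - right. rewrite Rabs_mult, Cq, Rmult_1_l.
    assert (Hr1 : 1 <= IZR r) by (apply IZR_le; lia).
    assert (Hr2 : IZR r <= INR k) by (rewrite INR_IZR_INZ; apply IZR_le; unfold K in Hb; lia).
    assert (0 < T) by (unfold T; lra).
    rewrite Rabs_pos_eq by (apply sin_ge_0; nra).
    apply sin_ge_of_between; try lra; nra.
Qed.

Lemma frame_l1_sq (P Q r : R) : r * r = P ^ 2 + Q ^ 2 ->
  (Rabs P + Rabs Q) * (Rabs P + Rabs Q) = r * r + Rabs (2 * (P * Q)).
Proof.
  intros Hrr. rewrite Hrr, !Rabs_mult, (Rabs_pos_eq 2) by lra.
  rewrite <- (pow2_abs P), <- (pow2_abs Q). ring.
Qed.

(* [(cT, sT)] and [(c4, s4)] stand for the cosine and sine of [2h] and [4h];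
   [C + i S = r^2 e^(2 i alpha)] for a vector of length [r] at angle [alpha] to the
   bisector, [|alpha| < h], and [(c2, s2) = (cos 2phi, sin 2phi)] for a rotation
   [phi] by a multiple of [2h], so that [s2 = 0] or [|s2| >= sin 4h]. *)
Lemma double_product_rotation (C S r cT sT c4 s4 c2 s2 : R) :
  cT * cT + sT * sT = 1 -> 0 < cT -> 0 < sT ->
  c4 = cT * cT - sT * sT -> s4 = 2 * sT * cT -> 0 <= c4 ->
  0 <= r -> C > r * r * cT -> S * S = (r * r) * (r * r) - C * C ->
  c2 * c2 + s2 * s2 = 1 -> s2 = 0 \/ s4 <= Rabs s2 ->
  Rabs S <= Rabs (S * c2 - C * s2).
Proof.
  intros HcTsT HcT HsT Ec4 Es4 Hc4 Hr HC HS2 Hc2s2 Hs2.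
  destruct Hs2 as [Hs0|Hge].
  - rewrite Hs0, Rmult_0_r, Rminus_0_r, Rabs_mult.
    assert (Hc1 : Rabs c2 = 1) by (unfold Rabs; destruct (Rcase_abs c2); nra).
    rewrite Hc1. lra.
  - assert (Hc4s4 : c4 * c4 + s4 * s4 = 1) by (rewrite Ec4, Es4; nra).
    assert (Hs4 : 0 <= s4) by (rewrite Es4; nra).
    assert (Hs2abs : s4 * s4 <= s2 * s2)
      by (rewrite <- (Rabs_mul_self s2); apply Rmult_le_compat; lra).
    assert (Hc2abs : Rabs c2 <= c4) by (apply Rabs_le_of_sq_le; lra).
    assert (HSabs : Rabs S <= r * r * sT).
    { apply Rabs_le_of_sq_le; [nra|].
      assert (0 <= r * r * cT) by nra.
      assert (C * C >= (r * r * cT) * (r * r * cT)) by nra. nra. }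
    assert (Hlow : C * Rabs s2 - Rabs S * Rabs c2 <= Rabs (S * c2 - C * s2)).
    { pose proof (Rabs_triang (S * c2 - C * s2) (- (S * c2))) as X.
      replace (S * c2 - C * s2 + - (S * c2)) with (- (C * s2)) in X by ring.
      rewrite !Rabs_Ropp, !Rabs_mult in X. rewrite (Rabs_pos_eq C) in X by nra. lra. }
    assert (H1 : C * s4 <= C * Rabs s2) by (apply Rmult_le_compat_l; nra).
    assert (H2 : Rabs S * Rabs c2 <= Rabs S * c4)
      by (apply Rmult_le_compat_l; [apply Rabs_pos | lra]).
    assert (H3 : Rabs S * (1 + c4) <= C * s4).
    { rewrite Es4, Ec4.
      assert (E1 : 1 + (cT * cT - sT * sT) = 2 * (cT * cT)) by nra. rewrite E1.
      assert (Rabs S * cT <= r * r * sT * cT) by (apply Rmult_le_compat_r; lra).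
      assert (r * r * cT * sT <= C * sT) by (apply Rmult_le_compat_r; lra).
      nra. }
    lra.
Qed.

Lemma double_product_le_rotate (k : nat) (n : Z) (P Q r : R) : (1 <= k)%nat ->
  0 <= r -> r * r = P ^ 2 + Q ^ 2 -> P > r * cos (half_theta k) ->
  let c := cos (IZR n * (2 * half_theta k)) in let sn := sin (IZR n * (2 * half_theta k)) in
  Rabs (2 * (P * Q)) <= Rabs (2 * ((P * c + Q * sn) * (Q * c - P * sn))).
Proof.
  intros Hk Hr Hrr Hin c sn.
  destruct (half_theta_bounds k Hk) as [Hh0 Hh4].
  destruct (cos_sin_half_theta k Hk) as [Hcs [Hs Hsc]].
  set (h := half_theta k) in *. pose proof PI_RGT_0.
  assert (HcTsT : cos (2 * h) * cos (2 * h) + sin (2 * h) * sin (2 * h) = 1)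
    by (pose proof (sin2_cos2 (2 * h)) as X; unfold Rsqr in X; lra).
  assert (Hcsn : c * c + sn * sn = 1)
    by (pose proof (sin2_cos2 (IZR n * (2 * h))) as X; unfold Rsqr in X; unfold c, sn; lra).
  assert (HP2 : P * P > r * r * (cos h * cos h)).
  { assert (0 <= r * cos h) by (apply Rmult_le_pos; lra).
    assert ((P - r * cos h) * (P + r * cos h) > 0) by (apply Rmult_lt_0_compat; lra). nra. }
  replace (2 * ((P * c + Q * sn) * (Q * c - P * sn)))
    with (2 * (P * Q) * (c * c - sn * sn) - (P * P - Q * Q) * (2 * sn * c)) by ring.
  apply (double_product_rotation _ _ r (cos (2 * h)) (sin (2 * h)) (cos (4 * h)) (sin (4 * h)));
    try assumption.
  - apply cos_gt_0; lra.
  - apply sin_gt_0; lra.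
  - replace (4 * h) with (2 * (2 * h)) by ring. apply cos_2a.
  - replace (4 * h) with (2 * (2 * h)) by ring. apply sin_2a.
  - apply cos_ge_0; lra.
  - assert (EQ : Q * Q = r * r - P * P) by (rewrite Hrr; ring).
    assert (Es : sin h * sin h = 1 - cos h * cos h) by lra.
    rewrite cos_2a, EQ, Es. nra.
  - rewrite Hrr. ring.
  - nra.
  - unfold c, sn. rewrite <- sin_2a.
    replace (2 * (IZR n * (2 * h))) with (IZR n * (4 * h)) by ring.
    apply (sin_multiple_bound k n Hk).
Qed.

Lemma frame_l1_le_rotate (k : nat) (a : R) (v : point) (n : Z) : (1 <= k)%nat ->
  dot v (dir a) > vnorm v * cos (half_theta k) ->
  frame_l1 a v <= frame_l1 (a + IZR n * (2 * half_theta k)) v.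
Proof.
  intros Hk Hin.
  unfold frame_l1. rewrite dot_dir_add, dot_perp_dir_add.
  pose proof (vnorm_sq_frame a v) as Hrr. pose proof (vnorm_ge0 v) as Hr.
  pose proof (double_product_le_rotate k n _ (dot v (perp_dir a)) _ Hk Hr Hrr Hin) as Hmain.
  cbv zeta in Hmain.
  set (r := vnorm v) in *.
  set (P := dot v (dir a)) in *. set (Q := dot v (perp_dir a)) in *.
  set (c := cos (IZR n * (2 * half_theta k))) in *. set (sn := sin (IZR n * (2 * half_theta k))) in *.
  set (P' := P * c + Q * sn) in *. set (Q' := Q * c - P * sn) in *.
  assert (Hrr' : r * r = P' ^ 2 + Q' ^ 2).
  { assert (Hcsn : c * c + sn * sn = 1)
      by (pose proof (sin2_cos2 (IZR n * (2 * half_theta k))) as X; unfold Rsqr in X; unfold c, sn; lra).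
    unfold P', Q'. rewrite Hrr.
    transitivity ((P * P + Q * Q) * (c * c + sn * sn)); [rewrite Hcsn; ring | ring]. }
  pose proof (Rabs_pos P); pose proof (Rabs_pos Q).
  pose proof (Rabs_pos P'); pose proof (Rabs_pos Q').
  rewrite <- (Rabs_pos_eq (Rabs P + Rabs Q)) by lra.
  apply Rabs_le_of_sq_le; [lra|].
  rewrite (frame_l1_sq P Q r Hrr), (frame_l1_sq P' Q' r Hrr'). lra.
Qed.

Lemma in_cone_iff (k : nat) (x : point) (i : nat) (y : point) :
  in_cone (4 * k + 4) x i y <->
  (i < 4 * k + 4)%nat /\ y <> x /\
  dot (vsub y x) (dir (INR i * (2 * half_theta k))) > vnorm (vsub y x) * cos (half_theta k).
Proof.
  unfold in_cone, bisector. rewrite theta_eq, pdist_vnorm.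
  replace (2 * half_theta k / 2) with (half_theta k) by field. reflexivity.
Qed.

Lemma polar (v : point) : 0 < vnorm v ->
  exists al, 0 <= al <= 2 * PI /\ fst v = vnorm v * sin al /\ snd v = vnorm v * cos al.
Proof.
  intros Hr. set (r := vnorm v) in *.
  pose proof (vnorm_sq v) as Hrr. fold r in Hrr.
  set (c0 := snd v / r).
  assert (Hc0 : -1 <= c0 <= 1).
  { unfold c0. split; apply Rmult_le_reg_r with r; try lra;
      unfold Rdiv; rewrite Rmult_assoc, Rinv_l by lra; nra. }
  assert (Hs0 : sin (acos c0) = Rabs (fst v) / r).
  { rewrite sin_acos by exact Hc0. unfold Rsqr.
    assert (E : 1 - c0 * c0 = (Rabs (fst v) / r) * (Rabs (fst v) / r)).
    { replace (Rabs (fst v) / r * (Rabs (fst v) / r))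
        with ((Rabs (fst v) * Rabs (fst v)) / (r * r)) by (field; lra).
      rewrite Rabs_mul_self. unfold c0. field_simplify_eq; [|lra]. nra. }
    rewrite E. apply sqrt_square.
    apply Rmult_le_pos; [apply Rabs_pos | left; apply Rinv_0_lt_compat; lra]. }
  assert (Hcc : cos (acos c0) = c0) by (apply cos_acos; exact Hc0).
  pose proof (acos_bound c0) as Hab. pose proof PI_RGT_0.
  destruct (Rle_dec 0 (fst v)) as [Hv|Hv].
  - exists (acos c0). split; [lra|]. split.
    + rewrite Hs0, Rabs_pos_eq by lra. field. lra.
    + rewrite Hcc. unfold c0. field. lra.
  - exists (2 * PI - acos c0). split; [lra|]. split.
    + rewrite sin_minus, sin_2PI, cos_2PI, Hs0, Rabs_left by lra. field. lra.
    + rewrite cos_minus, sin_2PI, cos_2PI, Hcc. unfold c0. field. lra.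
Qed.

Lemma dot_polar (v : point) (r al b : R) : fst v = r * sin al -> snd v = r * cos al ->
  dot v (dir b) = r * cos (al - b).
Proof. intros H1 H2. unfold dot, dir; simpl. rewrite H1, H2, cos_minus. ring. Qed.

Lemma cross_polar (v : point) (r al b : R) : fst v = r * sin al -> snd v = r * cos al ->
  cross v (dir b) = r * sin (al - b).
Proof. intros H1 H2. unfold cross, dir; simpl. rewrite H1, H2, sin_minus. ring. Qed.

Lemma angle_reduction (h al : R) (M : nat) :
  0 < h -> INR M * (2 * h) = 2 * PI -> 0 <= al <= 2 * PI ->
  exists i, (i <= M)%nat /\ - h <= al - INR i * (2 * h) < h.
Proof.
  intros Hh HM Hal. pose proof PI_RGT_0.
  set (y := (al + h) / (2 * h)).
  assert (Hy : y * (2 * h) = al + h) by (unfold y; field; lra).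
  destruct (Zfloor_bound y) as [Hz1 Hz2]. set (z := Zfloor y) in *.
  assert (Hz0 : (0 <= z)%Z).
  { assert (0 < y) by (unfold y; apply Rdiv_lt_0_compat; lra).
    assert (Hz : (-1 < z)%Z) by (apply lt_IZR; simpl; lra). lia. }
  assert (HzM : (z <= Z.of_nat M)%Z).
  { assert (y <= INR M + 1 / 2).
    { apply Rmult_le_reg_r with (2 * h); [lra|]. rewrite Hy, Rmult_plus_distr_r, HM. lra. }
    assert (Hl : IZR z < IZR (Z.of_nat M + 1)) by (rewrite plus_IZR, <- INR_IZR_INZ; lra).
    apply lt_IZR in Hl. lia. }
  exists (Z.to_nat z). split; [lia|].
  rewrite INR_IZR_INZ, Z2Nat.id by lia.
  assert (IZR z * (2 * h) <= y * (2 * h)) by (apply Rmult_le_compat_r; lra).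
  assert (y * (2 * h) < (IZR z + 1) * (2 * h)) by (apply Rmult_lt_compat_r; lra).
  lra.
Qed.

Lemma cos_gt_of_abs_lt (h x : R) : h <= PI -> - h < x < h -> cos h < cos x.
Proof.
  intros Hh Hx. pose proof PI_RGT_0.
  destruct (Rle_dec 0 x) as [Hx0|Hx0].
  - apply cos_decreasing_1; lra.
  - rewrite <- (cos_neg x). apply cos_decreasing_1; lra.
Qed.

(* The last hypothesis says that [v] is parallel to no boundary ray. *)
Lemma exists_cone (k : nat) (v : point) : (1 <= k)%nat -> 0 < vnorm v ->
  (forall j, (j < 4 * k + 4)%nat -> cross v (dir ((2 * INR j + 1) * theta (4 * k + 4) / 2)) <> 0) ->
  exists i, (i < 4 * k + 4)%nat /\
    dot v (dir (INR i * theta (4 * k + 4))) > vnorm v * cos (theta (4 * k + 4) / 2).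
Proof.
  intros Hk Hr Hgp.
  rewrite theta_eq in *. replace (2 * half_theta k / 2) with (half_theta k) by field.
  destruct (half_theta_bounds k Hk) as [Hh0 Hh4].
  pose proof (cone_count_full_turn k) as HM.
  set (h := half_theta k) in *. set (M := (4 * k + 4)%nat) in *.
  assert (Hgp' : forall j, (j < M)%nat -> cross v (dir ((2 * INR j + 1) * h)) <> 0).
  { intros j Hj. replace ((2 * INR j + 1) * h) with ((2 * INR j + 1) * (2 * h) / 2) by field.
    apply Hgp; exact Hj. }
  destruct (polar v Hr) as [al [Hal [H1 H2]]]. set (r := vnorm v) in *.
  pose proof PI_RGT_0.
  destruct (angle_reduction h al M Hh0 HM Hal) as [i [HiM [Hx1 Hx2]]].
  assert (Hbd : - h <> al - INR i * (2 * h)).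
  { intro Hx. destruct i as [|i'].
    - simpl in Hx. lra.
    - apply (Hgp' i'); [lia|].
      rewrite (cross_polar v r al _ H1 H2), S_INR in *.
      replace ((2 * INR i' + 1) * h) with al by lra. rewrite Rminus_diag, sin_0. ring. }
  assert (Hc : r * cos h < r * cos (al - INR i * (2 * h))).
  { apply Rmult_lt_compat_l; [exact Hr|]. apply cos_gt_of_abs_lt; lra. }
  destruct (Nat.eq_dec i M) as [Ei|Ni].
  - exists 0%nat. split; [unfold M; lia|].
    rewrite (dot_polar v r al _ H1 H2). simpl INR. rewrite Rmult_0_l, Rminus_0_r.
    rewrite Ei, HM, cos_minus, sin_2PI, cos_2PI in Hc. lra.
  - exists i. split; [lia|]. rewrite (dot_polar v r al _ H1 H2). lra.
Qed.

Lemma cone_frame_l1_le (k : nat) (x w : point) (i j : nat) : (1 <= k)%nat ->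
  in_cone (4 * k + 4) x j w ->
  frame_l1 (INR j * (2 * half_theta k)) (vsub w x)
  <= frame_l1 (INR i * (2 * half_theta k)) (vsub w x).
Proof.
  intros Hk Hc. apply in_cone_iff in Hc. destruct Hc as [_ [_ Hc]].
  replace (INR i * (2 * half_theta k))
    with (INR j * (2 * half_theta k) + IZR (Z.of_nat i - Z.of_nat j) * (2 * half_theta k))
    by (rewrite minus_IZR, <- !INR_IZR_INZ; ring).
  apply frame_l1_le_rotate; assumption.
Qed.

(** * Upper bound: the routing potential *)

Lemma cone_of_target (k : nat) (P : list point) (x w : point) : (1 <= k)%nat ->
  general_position (4 * k + 4) P -> In x P -> In w P -> x <> w ->
  exists i, in_cone (4 * k + 4) x i w.
Proof.
  intros Hk [GP _] Hx Hw Hxw.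
  assert (Hwx : w <> x) by congruence.
  destruct (exists_cone k (vsub w x) Hk (vnorm_vsub_pos w x Hwx)) as [i [Hi Hc]];
    [intros j Hj; apply GP; auto|].
  exists i. unfold in_cone, bisector. rewrite pdist_vnorm. auto.
Qed.

Lemma routing_path_cons (P : list point) (m : nat) (t x : point) (l : list point) :
  routing_path P m t x l -> exists l', l = x :: l'.
Proof. intros H; inversion H; subst; eexists; reflexivity. Qed.

Lemma routing_path_from_target (P : list point) (m : nat) (t : point) (l : list point) :
  routing_path P m t t l -> l = [t].
Proof. intros H; inversion H; subst; [reflexivity | congruence]. Qed.

Lemma routing_length_bound (k : nat) (P : list point) (w : point) : (1 <= k)%nat ->
  general_position (4 * k + 4) P -> In w P ->
  forall x l, routing_path P (4 * k + 4) w x l -> In x P ->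
  forall i, in_cone (4 * k + 4) x i w ->
  (cos (half_theta k) - sin (half_theta k)) * path_length l
    <= frame_l1 (INR i * (2 * half_theta k)) (vsub w x).
Proof.
  intros Hk HGP Hw.
  destruct (cos_sin_half_theta k Hk) as [Hcs [Hs Hsc]].
  induction 1 as [| x y l Hxt Hst Hpath IH]; intros Hx i Hc.
  { apply in_cone_iff in Hc. destruct Hc as [_ [Hne _]]. congruence. }
  destruct (routing_path_cons _ _ _ _ _ Hpath) as [l' El]. subst l.
  change (path_length (x :: y :: l')) with (pdist x y + path_length (y :: l')).
  rewrite pdist_vnorm.
  destruct (classic (y = w)) as [Eyw|Nyw].
  - subst y. rewrite (routing_path_from_target _ _ _ _ Hpath). simpl path_length.
    pose proof (vnorm_le_frame_l1 (INR i * (2 * half_theta k)) (vsub w x)).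
    pose proof (vnorm_ge0 (vsub w x)). nra.
  - destruct Hst as [[_ E] | [_ [i' [Hci' [HyP [Hcy Hmin]]]]]]; [congruence|].
    destruct (cone_of_target k P y w Hk HGP HyP Hw Nyw) as [j Hcj].
    pose proof (IH HyP j Hcj) as Hb.
    pose proof (cone_frame_l1_le k y w i' j Hk Hcj) as Hm1.
    pose proof (cone_frame_l1_le k x w i i' Hk Hci') as Hm2.
    pose proof (Hmin w Hw Hci') as Hpr. unfold proj, bisector in Hpr. rewrite theta_eq in Hpr.
    apply in_cone_iff in Hcy. destruct Hcy as [_ [_ Hcy]].
    pose proof (frame_l1_step _ _ _ x y w Hcs Hs ltac:(lra) Hcy Hpr). nra.
Qed.

(* The base value [frame_l1 0 v] is the [j = 0] term, so this is the plain
   minimum over all cones. *)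
Definition cone_potential (k : nat) (v : point) : R :=
  fold_right (fun j acc => Rmin (frame_l1 (INR j * (2 * half_theta k)) v) acc)
    (frame_l1 0 v) (seq 0 (4 * k + 4)).

Lemma fold_Rmin_le (f : nat -> R) (b : R) (l : list nat) (j : nat) :
  In j l -> fold_right (fun j acc => Rmin (f j) acc) b l <= f j.
Proof.
  induction l as [|a l IH]; simpl; [tauto|].
  intros [E|H]; [subst; apply Rmin_l | eapply Rle_trans; [apply Rmin_r | apply IH; exact H]].
Qed.

Lemma fold_Rmin_glb (f : nat -> R) (b a : R) (l : list nat) :
  a <= b -> (forall j, In j l -> a <= f j) -> a <= fold_right (fun j acc => Rmin (f j) acc) b l.
Proof.
  intros Hb. induction l as [|x l IH]; simpl; intros H; [exact Hb|].
  apply Rmin_glb; [apply H; left; reflexivity | apply IH; intros; apply H; right; assumption].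
Qed.

Lemma cone_potential_le (k : nat) (v : point) (j : nat) : (j < 4 * k + 4)%nat ->
  cone_potential k v <= frame_l1 (INR j * (2 * half_theta k)) v.
Proof. intros Hj. apply (fold_Rmin_le (fun j => frame_l1 _ v)). apply in_seq. lia. Qed.

Lemma cone_potential_at_cone (k : nat) (x w : point) (i : nat) : (1 <= k)%nat ->
  in_cone (4 * k + 4) x i w ->
  cone_potential k (vsub w x) = frame_l1 (INR i * (2 * half_theta k)) (vsub w x).
Proof.
  intros Hk Hc. apply Rle_antisym.
  - apply cone_potential_le. apply in_cone_iff in Hc. tauto.
  - apply (fold_Rmin_glb (fun j => frame_l1 _ (vsub w x))).
    + replace 0 with (INR 0 * (2 * half_theta k)) by (simpl; ring).
      apply cone_frame_l1_le; assumption.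
    + intros j _. apply cone_frame_l1_le; assumption.
Qed.

Lemma filter_length_lt {A : Type} (f g : A -> bool) (l : list A) (y : A) :
  (forall a, f a = true -> g a = true) -> In y l -> f y = false -> g y = true ->
  (length (filter f l) < length (filter g l))%nat.
Proof.
  intros Hfg.
  assert (Hle : forall l0, (length (filter f l0) <= length (filter g l0))%nat).
  { induction l0 as [|b l0 IH0]; simpl; [lia|].
    destruct (f b) eqn:Ef; [rewrite (Hfg b Ef); simpl; lia|].
    destruct (g b); simpl; lia. }
  induction l as [|a l IH]; simpl; [tauto|].
  intros [E|H] Hf Hg.
  - subst. rewrite Hf, Hg. simpl. specialize (Hle l). lia.
  - specialize (IH H Hf Hg).
    destruct (f a) eqn:Ef; [rewrite (Hfg a Ef); simpl; lia|].
    destruct (g a); simpl; lia.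
Qed.

Lemma finite_descent {A : Type} (P : list A) (V : A -> R) (Good : A -> Prop) :
  (forall x, In x P -> Good x \/ exists y, In y P /\ V y < V x /\ (Good y -> Good x)) ->
  forall x, In x P -> Good x.
Proof.
  intros Hstep.
  set (below := fun x z => if Rlt_dec (V z) (V x) then true else false).
  assert (Hmu : forall x y, In y P -> V y < V x ->
            (length (filter (below y) P) < length (filter (below x) P))%nat).
  { intros x y Hy Hlt. apply (filter_length_lt _ _ P y); [| exact Hy | |]; unfold below.
    - intros a Ha. destruct (Rlt_dec (V a) (V y)); [|discriminate].
      destruct (Rlt_dec (V a) (V x)); [reflexivity | lra].
    - destruct (Rlt_dec (V y) (V y)); [lra | reflexivity].
    - destruct (Rlt_dec (V y) (V x)); [reflexivity | lra]. }
  assert (Hind : forall n x, In x P -> (length (filter (below x) P) <= n)%nat -> Good x).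
  { induction n as [|n IHn]; intros x Hx Hn;
      destruct (Hstep x Hx) as [G | [y [Hy [Hlt Himp]]]]; auto;
      specialize (Hmu x y Hy Hlt).
    - lia.
    - apply Himp, (IHn y Hy). lia. }
  intros x Hx. exact (Hind _ x Hx (le_n _)).
Qed.

Lemma exists_argmin (l : list point) (C : point -> Prop) (f : point -> R) :
  (exists z, In z l /\ C z) ->
  exists y, In y l /\ C y /\ forall z, In z l -> C z -> f y <= f z.
Proof.
  induction l as [|a l IH]; simpl; intros [z [Hz Hcz]]; [tauto|].
  destruct (classic (exists z, In z l /\ C z)) as [Hex|Hnex].
  - destruct (IH Hex) as [y [Hy [Hcy Hmin]]].
    destruct (classic (C a /\ f a < f y)) as [[Hca Hlt]|Hn].
    + exists a. split; [left; reflexivity|]. split; [exact Hca|].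
      intros z0 [E|Hz0] Hc0; [subst; lra|]. specialize (Hmin z0 Hz0 Hc0). lra.
    + exists y. split; [right; exact Hy|]. split; [exact Hcy|].
      intros z0 [E|Hz0] Hc0; [|apply Hmin; assumption].
      subst. destruct (Rle_dec (f y) (f z0)) as [|Hn']; [assumption|].
      exfalso; apply Hn; split; [assumption | lra].
  - destruct Hz as [E|Hz]; [|exfalso; apply Hnex; exists z; split; assumption].
    subst. exists z. split; [left; reflexivity|]. split; [exact Hcz|].
    intros z0 [E|Hz0] Hc0; [subst; lra|]. exfalso; apply Hnex; exists z0; split; assumption.
Qed.

Lemma route_step_decreases (k : nat) (P : list point) (w x : point) : (1 <= k)%nat ->
  general_position (4 * k + 4) P -> In w P -> In x P -> x <> w ->
  ~ theta_edge P (4 * k + 4) x w ->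
  exists y, In y P /\ route_step P (4 * k + 4) w x y /\
    cone_potential k (vsub w y) < cone_potential k (vsub w x).
Proof.
  intros Hk HGP Hw Hx Nxw Hne.
  destruct (cos_sin_half_theta k Hk) as [Hcs [Hs Hsc]].
  destruct (cone_of_target k P x w Hk HGP Hx Hw Nxw) as [i Hci].
  destruct (exists_argmin P (in_cone (4 * k + 4) x i) (proj (4 * k + 4) x i))
    as [y [Hy [Hcy Hmin]]]; [exists w; split; assumption|].
  exists y. split; [exact Hy|]. split.
  { right. split; [exact Hne|]. exists i. split; [exact Hci|].
    split; [exact Hy|]. split; assumption. }
  rewrite (cone_potential_at_cone k x w i Hk Hci).
  pose proof (cone_potential_le k (vsub w y) i) as H1.
  apply in_cone_iff in Hcy. destruct Hcy as [Hi [Hyx Hcy]].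
  pose proof (Hmin w Hw Hci) as Hpr. unfold proj, bisector in Hpr. rewrite theta_eq in Hpr.
  pose proof (frame_l1_step _ _ _ x y w Hcs Hs ltac:(lra) Hcy Hpr) as Hstp.
  pose proof (vnorm_vsub_pos y x Hyx).
  assert (0 < (cos (half_theta k) - sin (half_theta k)) * vnorm (vsub y x))
    by (apply Rmult_lt_0_compat; lra).
  specialize (H1 Hi). lra.
Qed.

Lemma routing_path_exists (k : nat) (P : list point) (w x : point) : (1 <= k)%nat ->
  general_position (4 * k + 4) P -> In w P -> In x P ->
  exists l, routing_path P (4 * k + 4) w x l.
Proof.
  intros Hk HGP Hw. revert x.
  apply (finite_descent P (fun x => cone_potential k (vsub w x))).
  intros x Hx.
  destruct (classic (x = w)) as [Exw|Nxw]; [subst; left; exists [w]; constructor|].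
  destruct (classic (theta_edge P (4 * k + 4) x w)) as [He|Hne].
  - left. exists [x; w]. apply rp_step with w; [exact Nxw | left; auto | constructor].
  - right. destruct (route_step_decreases k P w x Hk HGP Hw Hx Nxw Hne) as [y [Hy [Hst Hlt]]].
    exists y. split; [exact Hy|]. split; [exact Hlt|].
    intros [l Hl]. exists (x :: l). apply rp_step with y; assumption.
Qed.

Lemma ratio_R_eq (k : nat) : (1 <= k)%nat ->
  ratio_R (4 * k + 4)
  = (cos (half_theta k) + sin (half_theta k)) / (cos (half_theta k) - sin (half_theta k)).
Proof.
  intros Hk. destruct (cos_sin_half_theta k Hk) as [_ [_ Hsc]].
  unfold ratio_R. rewrite theta_eq. replace (2 * half_theta k / 2) with (half_theta k) by field.
  field. lra.
Qed.

Theorem routing_stretch_le (k : nat) (P : list point) (u w : point) : (1 <= k)%nat ->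
  general_position (4 * k + 4) P -> In u P -> In w P ->
  forall l, routing_path P (4 * k + 4) w u l -> path_length l <= ratio_R (4 * k + 4) * pdist u w.
Proof.
  intros Hk HGP Hu Hw l Hl.
  destruct (cos_sin_half_theta k Hk) as [Hcs [Hs Hsc]].
  rewrite ratio_R_eq, pdist_vnorm by exact Hk.
  pose proof (vnorm_ge0 (vsub w u)) as Hr.
  set (co := cos (half_theta k)) in *. set (s := sin (half_theta k)) in *.
  assert (HR : 0 < (co + s) / (co - s)) by (apply Rdiv_lt_0_compat; lra).
  destruct (classic (u = w)) as [E|Ne].
  - subst. rewrite (routing_path_from_target _ _ _ _ Hl). simpl path_length. nra.
  - destruct (cone_of_target k P u w Hk HGP Hu Hw Ne) as [i Hci].
    pose proof (routing_length_bound k P w Hk HGP Hw u l Hl Hu i Hci) as Hb.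
    apply in_cone_iff in Hci. destruct Hci as [_ [_ Hci]].
    pose proof (cone_frame_l1_bound _ _ _ _ _ Hcs Hs Hr
       (vnorm_sq_frame (INR i * (2 * half_theta k)) (vsub w u)) ltac:(lra) Hci) as HR'.
    unfold frame_l1 in Hb. fold co s in Hb.
    apply Rmult_le_reg_l with (co - s); [lra|].
    replace ((co - s) * ((co + s) / (co - s) * vnorm (vsub w u))) with ((co + s) * vnorm (vsub w u))
      by (field; lra).
    lra.
Qed.

(** * Lower bound: properties holding for all small perturbations *)

Definition near0 (Pr : R -> Prop) : Prop := exists eta, 0 < eta /\ forall d, 0 < d < eta -> Pr d.

Lemma near0_always (Pr : R -> Prop) : (forall d, Pr d) -> near0 Pr.
Proof. intros H. exists 1. split; [lra|]. intros d _. apply H. Qed.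

Lemma near0_and (P1 P2 : R -> Prop) : near0 P1 -> near0 P2 -> near0 (fun d => P1 d /\ P2 d).
Proof.
  intros [e1 [H1 K1]] [e2 [H2 K2]]. exists (Rmin e1 e2). split; [apply Rmin_glb_lt; lra|].
  intros d Hd. pose proof (Rmin_l e1 e2); pose proof (Rmin_r e1 e2).
  split; [apply K1 | apply K2]; lra.
Qed.

Lemma near0_mono (P1 P2 : R -> Prop) :
  near0 P1 -> (forall d, 0 < d -> P1 d -> P2 d) -> near0 P2.
Proof. intros [e [H K]] Hi. exists e. split; [lra|]. intros d Hd. apply Hi; [lra | apply K; lra]. Qed.

Lemma near0_forall_lt (M : nat) (Pr : nat -> R -> Prop) :
  (forall i, (i < M)%nat -> near0 (Pr i)) -> near0 (fun d => forall i, (i < M)%nat -> Pr i d).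
Proof.
  induction M as [|M IH]; intros H.
  - apply near0_always. intros d i Hi. lia.
  - eapply near0_mono; [apply (near0_and _ _ (IH (fun i Hi => H i ltac:(lia))) (H M ltac:(lia)))|].
    intros d _ [K1 K2] i Hi.
    destruct (Nat.eq_dec i M) as [E|Ne]; [subst; exact K2 | apply K1; lia].
Qed.

Lemma near0_perturb (a B : R) (f : R -> R) : a <> 0 -> 0 <= B ->
  (forall d, 0 < d < 1 -> Rabs (f d - a) <= d * B) ->
  near0 (fun d => f d <> 0 /\ (0 < a -> 0 < f d)).
Proof.
  intros Ha HB Hf.
  assert (Hpa : 0 < Rabs a) by (apply Rabs_pos_lt; exact Ha).
  exists (Rmin 1 (Rabs a / (2 * (B + 1)))). split.
  - apply Rmin_glb_lt; [lra|]. apply Rdiv_lt_0_compat; lra.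
  - intros d Hd. pose proof (Rmin_l 1 (Rabs a / (2 * (B + 1)))).
    pose proof (Rmin_r 1 (Rabs a / (2 * (B + 1)))).
    specialize (Hf d ltac:(lra)).
    assert (HdB : d * B < Rabs a).
    { assert (Hd2 : d < Rabs a / (2 * (B + 1))) by lra.
      apply Rmult_lt_compat_r with (r := 2 * (B + 1)) in Hd2; [|lra].
      unfold Rdiv in Hd2. rewrite Rmult_assoc, Rinv_l, Rmult_1_r in Hd2 by lra.
      nra. }
    split.
    + intro E. rewrite E, Rminus_0_l, Rabs_Ropp in Hf. lra.
    + intro Hpos. rewrite Rabs_pos_eq in HdB by lra.
      unfold Rabs in Hf; destruct (Rcase_abs (f d - a)); lra.
Qed.

Definition poly4 (a0 a1 a2 a3 a4 d : R) : R :=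
  a0 + a1 * d + a2 * d ^ 2 + a3 * d ^ 3 + a4 * d ^ 4.

Lemma poly4_shift (a1 a2 a3 a4 d : R) : poly4 0 a1 a2 a3 a4 d = d * poly4 a1 a2 a3 a4 0 d.
Proof. unfold poly4. ring. Qed.

Lemma poly4_tail_bound (a0 a1 a2 a3 a4 d : R) : 0 < d < 1 ->
  Rabs (poly4 a0 a1 a2 a3 a4 d - a0) <= d * (Rabs a1 + Rabs a2 + Rabs a3 + Rabs a4).
Proof.
  intros Hd. unfold poly4.
  replace (a0 + a1 * d + a2 * d ^ 2 + a3 * d ^ 3 + a4 * d ^ 4 - a0)
    with (a1 * d + a2 * d ^ 2 + a3 * d ^ 3 + a4 * d ^ 4) by ring.
  assert (H2 : 0 <= d ^ 2 <= d) by (simpl; split; nra).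
  assert (H3 : 0 <= d ^ 3 <= d) by (simpl; split; nra).
  assert (H4 : 0 <= d ^ 4 <= d) by (simpl; split; nra).
  eapply Rle_trans; [apply Rabs_triang|]. eapply Rle_trans; [apply Rplus_le_compat_r; apply Rabs_triang|].
  eapply Rle_trans; [apply Rplus_le_compat_r; apply Rplus_le_compat_r; apply Rabs_triang|].
  rewrite !Rabs_mult, !(Rabs_pos_eq d), !(Rabs_pos_eq (d ^ 2)), !(Rabs_pos_eq (d ^ 3)),
    !(Rabs_pos_eq (d ^ 4)) by lra.
  pose proof (Rabs_pos a1); pose proof (Rabs_pos a2); pose proof (Rabs_pos a3); pose proof (Rabs_pos a4).
  assert (Rabs a2 * d ^ 2 <= Rabs a2 * d) by (apply Rmult_le_compat_l; lra).
  assert (Rabs a3 * d ^ 3 <= Rabs a3 * d) by (apply Rmult_le_compat_l; lra).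
  assert (Rabs a4 * d ^ 4 <= Rabs a4 * d) by (apply Rmult_le_compat_l; lra).
  nra.
Qed.

Lemma near0_poly4_sign (a0 a1 a2 a3 a4 : R) : a0 <> 0 ->
  near0 (fun d => poly4 a0 a1 a2 a3 a4 d <> 0 /\ (0 < a0 -> 0 < poly4 a0 a1 a2 a3 a4 d)).
Proof.
  intros Ha. apply (near0_perturb a0 (Rabs a1 + Rabs a2 + Rabs a3 + Rabs a4)); [exact Ha | |].
  - pose proof (Rabs_pos a1); pose proof (Rabs_pos a2); pose proof (Rabs_pos a3);
      pose proof (Rabs_pos a4); lra.
  - intros d Hd. apply poly4_tail_bound; exact Hd.
Qed.

Lemma near0_poly4_pos (a0 a1 a2 a3 a4 : R) : 0 < a0 -> near0 (fun d => 0 < poly4 a0 a1 a2 a3 a4 d).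
Proof.
  intros Ha. eapply near0_mono; [apply (near0_poly4_sign a0 a1 a2 a3 a4); lra|].
  intros d _ [_ H]. exact (H Ha).
Qed.

(* Dividing by the lowest power of [d] reduces to a nonzero constant term. *)
Lemma near0_poly4_neq0 (a0 a1 a2 a3 a4 : R) : (a0 <> 0 \/ a1 <> 0 \/ a2 <> 0 \/ a3 <> 0) ->
  near0 (fun d => poly4 a0 a1 a2 a3 a4 d <> 0).
Proof.
  assert (Hshift : forall b1 b2 b3 b4, near0 (fun d => poly4 b1 b2 b3 b4 0 d <> 0) ->
            near0 (fun d => poly4 0 b1 b2 b3 b4 d <> 0)).
  { intros b1 b2 b3 b4 H. eapply near0_mono; [exact H|]. intros d Hd Hp.
    rewrite poly4_shift. apply Rmult_integral_contrapositive. split; lra. }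
  assert (Hlead : forall b0 b1 b2 b3 b4, b0 <> 0 -> near0 (fun d => poly4 b0 b1 b2 b3 b4 d <> 0)).
  { intros b0 b1 b2 b3 b4 Hb. eapply near0_mono; [apply (near0_poly4_sign b0 b1 b2 b3 b4 Hb)|].
    intros d _ [H _]. exact H. }
  intros H.
  destruct (Req_dec a0 0) as [E0|N0]; [subst a0; apply Hshift | apply Hlead, N0].
  destruct (Req_dec a1 0) as [E1|N1]; [subst a1; apply Hshift | apply Hlead, N1].
  destruct (Req_dec a2 0) as [E2|N2]; [subst a2; apply Hshift | apply Hlead, N2].
  apply Hlead. destruct H as [H|[H|[H|H]]]; tauto.
Qed.

Definition along (e : bool) (p : point) : R := if e then snd p else fst p.
Definition across (e : bool) (p : point) : R := if e then fst p else snd p.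

Lemma along_vsub (e : bool) (p x : point) : along e (vsub p x) = along e p - along e x.
Proof. destruct e; reflexivity. Qed.

Lemma across_vsub (e : bool) (p x : point) : across e (vsub p x) = across e p - across e x.
Proof. destruct e; reflexivity. Qed.

(* The cones bisected by the positive and by the negative [along e] axis. *)
Definition cone_ahead (k : nat) (e : bool) : nat := if e then 0%nat else (k + 1)%nat.
Definition cone_behind (k : nat) (e : bool) : nat :=
  if e then (2 * (k + 1))%nat else (3 * (k + 1))%nat.

Lemma in_cone_of_frame (k : nat) (x p : point) (i : nat) (P Q : R) : (1 <= k)%nat ->
  (i < 4 * k + 4)%nat ->
  dot (vsub p x) (dir (INR i * (2 * half_theta k))) = P ->
  Rabs (dot (vsub p x) (perp_dir (INR i * (2 * half_theta k)))) = Rabs Q ->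
  in_cone (4 * k + 4) x i p <->
  p <> x /\ 0 < P /\ cos (half_theta k) * Rabs Q < sin (half_theta k) * P.
Proof.
  intros Hk Hi E1 E2. destruct (cos_sin_half_theta k Hk) as [Hcs [Hs Hsc]].
  rewrite in_cone_iff.
  rewrite (cone_iff_lateral _ _ _ _ _ Hcs Hs (vnorm_ge0 _) (vnorm_sq_frame _ _) ltac:(lra)).
  rewrite E1, E2. tauto.
Qed.

Lemma frame_ahead (k : nat) (e : bool) (v : point) :
  dot v (dir (INR (cone_ahead k e) * (2 * half_theta k))) = along e v /\
  Rabs (dot v (perp_dir (INR (cone_ahead k e) * (2 * half_theta k)))) = Rabs (across e v).
Proof.
  assert (A : INR (k + 1) * (2 * half_theta k) = PI / 2)
    by (unfold half_theta; rewrite plus_INR; simpl; field; pose proof (pos_INR k); lra).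
  destruct e; unfold cone_ahead; [|rewrite A]; unfold dot, dir, perp_dir, along, across; simpl.
  - rewrite Rmult_0_l, sin_0, cos_0. split; [ring|]. f_equal; ring.
  - rewrite sin_PI2, cos_PI2. split; [ring|].
    replace (fst v * 0 + snd v * - (1)) with (- snd v) by ring. apply Rabs_Ropp.
Qed.

Lemma frame_behind (k : nat) (e : bool) (v : point) :
  dot v (dir (INR (cone_behind k e) * (2 * half_theta k))) = - along e v /\
  Rabs (dot v (perp_dir (INR (cone_behind k e) * (2 * half_theta k)))) = Rabs (across e v).
Proof.
  assert (A2 : INR (2 * (k + 1)) * (2 * half_theta k) = PI)
    by (unfold half_theta; rewrite mult_INR, plus_INR; simpl; field; pose proof (pos_INR k); lra).
  assert (A3 : INR (3 * (k + 1)) * (2 * half_theta k) = PI + PI / 2)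
    by (unfold half_theta; rewrite mult_INR, plus_INR; simpl; field; pose proof (pos_INR k); lra).
  destruct e; unfold cone_behind; [rewrite A2 | rewrite A3];
    unfold dot, dir, perp_dir, along, across; simpl.
  - rewrite sin_PI, cos_PI. split; [ring|].
    replace (fst v * -1 + snd v * - 0) with (- fst v) by ring. apply Rabs_Ropp.
  - rewrite sin_plus, cos_plus, sin_PI, cos_PI, sin_PI2, cos_PI2.
    split; [ring|]. f_equal; ring.
Qed.

Lemma in_cone_ahead_iff (k : nat) (e : bool) (x p : point) : (1 <= k)%nat ->
  in_cone (4 * k + 4) x (cone_ahead k e) p <->
  p <> x /\ 0 < along e p - along e x /\
  cos (half_theta k) * Rabs (across e p - across e x) < sin (half_theta k) * (along e p - along e x).
Proof.
  intros Hk. destruct (frame_ahead k e (vsub p x)) as [E1 E2].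
  rewrite along_vsub in E1. rewrite across_vsub in E2.
  apply in_cone_of_frame; [exact Hk | destruct e; unfold cone_ahead; lia | exact E1 | exact E2].
Qed.

Lemma in_cone_behind_iff (k : nat) (e : bool) (x p : point) : (1 <= k)%nat ->
  in_cone (4 * k + 4) x (cone_behind k e) p <->
  p <> x /\ 0 < along e x - along e p /\
  cos (half_theta k) * Rabs (across e x - across e p) < sin (half_theta k) * (along e x - along e p).
Proof.
  intros Hk. destruct (frame_behind k e (vsub p x)) as [E1 E2].
  rewrite along_vsub in E1. rewrite across_vsub in E2.
  rewrite <- (Rabs_Ropp (across e p - across e x)) in E2.
  replace (- (across e p - across e x)) with (across e x - across e p) in E2 by ring.
  apply in_cone_of_frame;
    [exact Hk | destruct e; unfold cone_behind; lia | rewrite E1; ring | exact E2].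
Qed.

Lemma proj_ahead (k : nat) (e : bool) (x p : point) :
  proj (4 * k + 4) x (cone_ahead k e) p = along e p - along e x.
Proof. unfold proj, bisector. rewrite theta_eq, <- along_vsub. apply frame_ahead. Qed.

Lemma proj_behind (k : nat) (e : bool) (x p : point) :
  proj (4 * k + 4) x (cone_behind k e) p = along e x - along e p.
Proof.
  unfold proj, bisector. rewrite theta_eq, (proj1 (frame_behind k e (vsub p x))), along_vsub.
  ring.
Qed.

Lemma cos_le_of_between (T x : R) : 0 < T <= PI -> T <= x <= 2 * PI - T -> cos x <= cos T.
Proof.
  intros HT Hx. pose proof PI_RGT_0.
  destruct (Rle_dec x PI) as [Hl|Hl].
  - destruct (Req_dec x T) as [E|Ne]; [subst; lra|]. left. apply cos_decreasing_1; lra.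
  - replace x with (2 * PI - (2 * PI - x)) by ring. rewrite cos_minus, cos_2PI, sin_2PI.
    replace (1 * cos (2 * PI - x) + 0 * sin (2 * PI - x)) with (cos (2 * PI - x)) by ring.
    destruct (Req_dec (2 * PI - x) T) as [E|Ne]; [rewrite E; lra|].
    left. apply cos_decreasing_1; lra.
Qed.

Lemma cos_bisector_angle_le (k i j : nat) : (1 <= k)%nat ->
  (i < 4 * k + 4)%nat -> (j < 4 * k + 4)%nat -> i <> j ->
  cos (INR i * (2 * half_theta k) - INR j * (2 * half_theta k)) <= cos (2 * half_theta k).
Proof.
  intros Hk Hi Hj Hij.
  destruct (half_theta_bounds k Hk) as [Hh0 Hh4].
  pose proof (cone_count_full_turn k) as HM. set (h := half_theta k) in *.
  assert (Hi' : INR i + 1 <= INR (4 * k + 4)) by (rewrite <- S_INR; apply le_INR; lia).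
  assert (Hj' : INR j + 1 <= INR (4 * k + 4)) by (rewrite <- S_INR; apply le_INR; lia).
  pose proof (pos_INR i); pose proof (pos_INR j). pose proof PI_RGT_0.
  destruct (Nat.lt_ge_cases i j) as [Hl|Hl].
  - rewrite <- cos_neg.
    replace (- (INR i * (2 * h) - INR j * (2 * h))) with ((INR j - INR i) * (2 * h)) by ring.
    assert (1 <= INR j - INR i) by (rewrite <- minus_INR by lia; apply (le_INR 1); lia).
    apply cos_le_of_between; [lra | nra].
  - replace (INR i * (2 * h) - INR j * (2 * h)) with ((INR i - INR j) * (2 * h)) by ring.
    assert (1 <= INR i - INR j) by (rewrite <- minus_INR by lia; apply (le_INR 1); lia).
    apply cos_le_of_between; [lra | nra].
Qed.

Lemma dot_sq_le (v b : point) :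
  dot v b * dot v b <= (fst v ^ 2 + snd v ^ 2) * (fst b ^ 2 + snd b ^ 2).
Proof.
  unfold dot. pose proof (pow2_ge_0 (fst v * snd b - snd v * fst b)).
  replace ((fst v ^ 2 + snd v ^ 2) * (fst b ^ 2 + snd b ^ 2)) with
    ((fst v * fst b + snd v * snd b) * (fst v * fst b + snd v * snd b)
     + (fst v * snd b - snd v * fst b) ^ 2) by ring.
  lra.
Qed.

(* If [v] were in two cones it would make an angle less than [h] with both
   bisectors, hence less than [h] with their sum, whose length is at most
   [2 cos h]; Cauchy-Schwarz then fails. *)
Lemma in_cone_unique (k : nat) (x : point) (i j : nat) (p : point) : (1 <= k)%nat ->
  in_cone (4 * k + 4) x i p -> in_cone (4 * k + 4) x j p -> i = j.
Proof.
  intros Hk Hi Hj.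
  destruct (cos_sin_half_theta k Hk) as [Hcs [Hs Hsc]].
  apply in_cone_iff in Hi. apply in_cone_iff in Hj.
  destruct Hi as [Hi [Hne Hdi]]. destruct Hj as [Hj [_ Hdj]].
  destruct (Nat.eq_dec i j) as [E|Ne]; [exact E | exfalso].
  pose proof (cos_bisector_angle_le k i j Hk Hi Hj Ne) as Hcos.
  rewrite cos_2a in Hcos.
  set (h := half_theta k) in *. set (v := vsub p x) in *.
  set (bi := dir (INR i * (2 * h))) in *. set (bj := dir (INR j * (2 * h))) in *.
  set (b := (fst bi + fst bj, snd bi + snd bj) : point).
  assert (Hdb : dot v b = dot v bi + dot v bj) by (unfold dot, b; simpl; ring).
  assert (Hb2 : fst b ^ 2 + snd b ^ 2 = 2 + 2 * cos (INR i * (2 * h) - INR j * (2 * h))).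
  { unfold b, bi, bj, dir; simpl. rewrite cos_minus.
    pose proof (sin2_cos2 (INR i * (2 * h))) as X1. pose proof (sin2_cos2 (INR j * (2 * h))) as X2.
    unfold Rsqr in X1, X2. nra. }
  pose proof (dot_sq_le v b) as CS. rewrite Hdb, Hb2, <- vnorm_sq in CS.
  pose proof (vnorm_ge0 v) as Hr.
  set (r := vnorm v) in *. set (co := cos h) in *.
  assert (0 <= 2 * r * co) by nra.
  assert ((dot v bi + dot v bj) * (dot v bi + dot v bj) > (2 * r * co) * (2 * r * co)) by nra.
  assert (r * r * (2 + 2 * cos (INR i * (2 * h) - INR j * (2 * h))) <= r * r * (4 * (co * co)))
    by (apply Rmult_le_compat_l; nra).
  nra.
Qed.

(** * The zigzag staircase *)

Definition cos_h (k : nat) : R := cos (half_theta k).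
Definition sin_h (k : nat) : R := sin (half_theta k).
Definition tan_h (k : nat) : R := sin_h k / cos_h k.
Definition shrink (k : nat) : R := 2 * sin_h k * cos_h k.
Definition growth (k : nat) : R := 2 / tan_h k.

Record param_facts (co s t g rho cT : R) : Prop := {
  pf_cs : co * co + s * s = 1; pf_s : 0 < s; pf_sc : s < co; pf_co : 0 < co;
  pf_s2 : 4 * (s * s) < 1;
  pf_t : t = s / co; pf_tpos : 0 < t; pf_t1 : t < 1;
  pf_g : g = 2 * s * co; pf_gpos : 0 < g; pf_g1 : g < 1; pf_tg : t < g;
  pf_2tg : 2 * t * g < 1; pf_gt : g * (1 + t * t) = 2 * t;
  pf_rho : rho * t = 2; pf_rho1 : 1 < rho;
  pf_cT : cT = co * co - s * s; pf_cTpos : 0 < cT;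
  pf_cst : co - s * t = cT / co }.

Lemma param_facts_hold (k : nat) : (1 <= k)%nat ->
  param_facts (cos_h k) (sin_h k) (tan_h k) (shrink k) (growth k) (cos (2 * half_theta k)).
Proof.
  intros Hk.
  destruct (cos_sin_half_theta k Hk) as [Hcs [Hs Hsc]].
  destruct (half_theta_bounds k Hk) as [Hh0 Hh4].
  pose proof PI_4. pose proof PI_RGT_0.
  assert (HcT : 0 < cos (2 * half_theta k)) by (apply cos_gt_0; lra).
  pose proof (cos_2a (half_theta k)) as EcT.
  assert (Hsh : sin (half_theta k) < half_theta k) by (apply sin_lt_x; lra).
  unfold cos_h, sin_h, tan_h, shrink, growth.
  set (co := cos (half_theta k)) in *. set (s := sin (half_theta k)) in *.
  assert (Hco : 0 < co) by lra.
  assert (Hs12 : s < 1/2) by lra.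
  assert (Ht : 0 < s / co) by (apply Rdiv_lt_0_compat; lra).
  assert (Ht1 : s / co < 1).
  { apply Rmult_lt_reg_r with co; [lra|]. unfold Rdiv. rewrite Rmult_assoc, Rinv_l by lra. lra. }
  constructor; unfold tan_h, shrink, growth, cos_h, sin_h; fold co s;
    try reflexivity; try lra; try nra.
  - apply Rmult_lt_reg_r with co; [lra|]. unfold Rdiv. rewrite Rmult_assoc, Rinv_l by lra. nra.
  - replace (2 * (s / co) * (2 * s * co)) with (4 * (s * s)) by (field; lra). nra.
  - replace (2 * s * co * (1 + s / co * (s / co))) with (2 * s * (co * co + s * s) / co)
      by (field; lra).
    rewrite Hcs. field. lra.
  - field. split; lra.
  - replace (2 / (s / co)) with (2 * co / s) by (field; lra).
    apply Rmult_lt_reg_r with s; [lra|]. unfold Rdiv. rewrite Rmult_assoc, Rinv_l by lra. lra.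
  - rewrite EcT. field. lra.
Qed.

(* The staircase [stair_pt j] ([j < 2N + 2]) has coordinates [-g^j] and
   [-(t g^j - m_j)], with [g = shrink k = sin theta], [t = tan h] and a slack
   [m_j] growing by the factor [growth k = 2 / t]; the two coordinates swap
   roles with the parity of [j].  The routing path from [stair_pt 0] to the
   origin visits every [stair_pt j] in turn, each hop being almost a boundary
   ray of a cone, where the potential of the upper bound is least efficient.
   The factor [(g / rho)^(2N + 2)] in [slack0] keeps [m_j <= t g^j / 4] for all
   [j <= 2N + 2].  [stair 0] is the origin and [stair (S j) = stair_pt j]. *)
Definition stair_len (k j : nat) : R := shrink k ^ j.
Definition slack0 (k N : nat) : R := tan_h k / 4 * (shrink k / growth k) ^ (2 * N + 2).
Definition slack (k N j : nat) : R := slack0 k N * growth k ^ j.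
Definition stair_off (k N j : nat) : R := tan_h k * stair_len k j - slack k N j.
Definition stair_pt (k N j : nat) : point :=
  if Nat.even j then (- stair_off k N j, - stair_len k j)
  else (- stair_len k j, - stair_off k N j).
Definition stair (k N idx : nat) : point :=
  match idx with O => (0, 0) | S j => stair_pt k N j end.

Ltac param_facts_of k Hk :=
  destruct (param_facts_hold k Hk)
    as [Pcs Ps Psc Pco Ps2 Ptd Ptpos Pt1 Pg Pgpos Pg1 Ptg P2tg Pgt Prho Prho1 PcT PcTpos Pcst].

Lemma pow_lt_decr (x : R) (i j : nat) : 0 < x < 1 -> (i < j)%nat -> x ^ j < x ^ i.
Proof.
  intros Hx Hij. replace j with (i + (j - i))%nat by lia. rewrite pow_add.
  assert (0 < x ^ i) by (apply pow_lt; lra).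
  assert (x ^ (j - i) < 1) by (apply pow_lt_1_compat; [lra| lia]).
  nra.
Qed.

Lemma stair_len_pos (k j : nat) : (1 <= k)%nat -> 0 < stair_len k j.
Proof. intros Hk. param_facts_of k Hk. unfold stair_len. apply pow_lt; lra. Qed.

Lemma stair_len_succ (k j : nat) : stair_len k (S j) = shrink k * stair_len k j.
Proof. reflexivity. Qed.

Lemma stair_len_lt (k i j : nat) : (1 <= k)%nat -> (i < j)%nat -> stair_len k j < stair_len k i.
Proof. intros Hk Hij. param_facts_of k Hk. unfold stair_len. apply pow_lt_decr; [lra | exact Hij]. Qed.

Lemma slack0_pos (k N : nat) : (1 <= k)%nat -> 0 < slack0 k N.
Proof.
  intros Hk. param_facts_of k Hk. unfold slack0.
  apply Rmult_lt_0_compat; [lra|]. apply pow_lt. apply Rdiv_lt_0_compat; lra.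
Qed.

Lemma slack_pos (k N j : nat) : (1 <= k)%nat -> 0 < slack k N j.
Proof.
  intros Hk. param_facts_of k Hk. unfold slack.
  apply Rmult_lt_0_compat; [apply slack0_pos; exact Hk | apply pow_lt; lra].
Qed.

Lemma slack_succ (k N j : nat) : (1 <= k)%nat -> slack k N j < tan_h k * slack k N (S j).
Proof.
  intros Hk. pose proof (slack_pos k N j Hk). param_facts_of k Hk.
  unfold slack in *. simpl.
  replace (tan_h k * (slack0 k N * (growth k * growth k ^ j)))
    with ((growth k * tan_h k) * (slack0 k N * growth k ^ j)) by ring.
  rewrite Prho. lra.
Qed.

Lemma slack_lt (k N i j : nat) : (1 <= k)%nat -> (i < j)%nat -> slack k N i < slack k N j.
Proof.
  intros Hk Hij. param_facts_of k Hk. unfold slack.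
  apply Rmult_lt_compat_l; [apply slack0_pos; exact Hk|]. apply Rlt_pow; assumption.
Qed.

Lemma slack_small (k N j : nat) : (1 <= k)%nat -> (j <= 2 * N + 2)%nat ->
  slack k N j <= tan_h k * stair_len k j / 4.
Proof.
  intros Hk Hj. param_facts_of k Hk. unfold slack, slack0, stair_len.
  set (q := shrink k / growth k). set (L := (2 * N + 2)%nat).
  assert (Hq0 : 0 < q) by (apply Rdiv_lt_0_compat; lra).
  assert (Hq1 : q < 1).
  { apply Rmult_lt_reg_r with (growth k); [lra|]. unfold q, Rdiv.
    rewrite Rmult_assoc, Rinv_l by lra. lra. }
  replace (tan_h k / 4 * q ^ L * growth k ^ j)
    with (tan_h k / 4 * q ^ (L - j) * (q * growth k) ^ j)
    by (rewrite Rpow_mult_distr, Rmult_assoc, <- (Rmult_assoc (q ^ (L - j))), <- pow_add;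
        replace (L - j + j)%nat with L by (unfold L; lia); ring).
  replace (q * growth k) with (shrink k) by (unfold q; field; lra).
  assert (H3 : q ^ (L - j) <= 1).
  { destruct (L - j)%nat eqn:Ez; [simpl; lra|]. left. apply pow_lt_1_compat; [lra | lia]. }
  assert (0 < shrink k ^ j) by (apply pow_lt; lra).
  assert (0 <= q ^ (L - j)) by (apply pow_le; lra).
  assert (tan_h k / 4 * q ^ (L - j) <= tan_h k / 4 * 1) by (apply Rmult_le_compat_l; lra).
  nra.
Qed.

Lemma stair_off_bounds (k N j : nat) : (1 <= k)%nat -> (j <= 2 * N + 2)%nat ->
  0 < stair_off k N j < tan_h k * stair_len k j.
Proof.
  intros Hk Hj. pose proof (slack_small k N j Hk Hj). pose proof (slack_pos k N j Hk).
  pose proof (stair_len_pos k j Hk). param_facts_of k Hk. unfold stair_off.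
  assert (0 < tan_h k * stair_len k j) by (apply Rmult_lt_0_compat; lra). lra.
Qed.

Lemma stair_off_lt (k N i j : nat) : (1 <= k)%nat -> (i < j)%nat ->
  stair_off k N j < stair_off k N i.
Proof.
  intros Hk Hij. pose proof (stair_len_lt k i j Hk Hij). pose proof (slack_lt k N i j Hk Hij).
  param_facts_of k Hk. unfold stair_off.
  assert (tan_h k * stair_len k j < tan_h k * stair_len k i) by (apply Rmult_lt_compat_l; lra). lra.
Qed.

(** * Perturbation into general position *)

(* The point of index [idx] moves along the curve
   [d |-> (d c + d^3 c, d c^2)] with [c = idx + 1]: all the quantities deciding
   general position are polynomials in [d] with a nonzero low-order term. *)
Definition pert_coef (idx : nat) : R := INR idx + 1.
Definition perturb (Q : nat -> point) (d : R) (idx : nat) : point :=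
  (fst (Q idx) + d * pert_coef idx + d ^ 3 * pert_coef idx, snd (Q idx) + d * pert_coef idx ^ 2).

(* Cone memberships and projection comparisons between points [i1], [i2] are
   sign conditions on linear forms of their coordinate differences. *)
Definition lin_gap (Q : nat -> point) (d : R) (e : bool) (i1 i2 : nat) (al be : R) : R :=
  al * (along e (perturb Q d i1) - along e (perturb Q d i2))
  + be * (across e (perturb Q d i1) - across e (perturb Q d i2)).

Definition lin_gap0 (Q : nat -> point) (e : bool) (i1 i2 : nat) (al be : R) : R :=
  al * (along e (Q i1) - along e (Q i2)) + be * (across e (Q i1) - across e (Q i2)).

Lemma near0_lin_gap (Q : nat -> point) (e : bool) (i1 i2 : nat) (al be C : R) :
  lin_gap0 Q e i1 i2 al be > C -> near0 (fun d => lin_gap Q d e i1 i2 al be > C).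
Proof.
  intros H.
  set (D1 := pert_coef i1 - pert_coef i2). set (D2 := pert_coef i1 ^ 2 - pert_coef i2 ^ 2).
  destruct e.
  - eapply near0_mono; [apply (near0_poly4_pos (lin_gap0 Q true i1 i2 al be - C)
        (al * D2 + be * D1) 0 (be * D1) 0); lra|].
    intros d _ Hp. unfold poly4, lin_gap, lin_gap0, perturb, along, across, D1, D2 in *; simpl in *. nra.
  - eapply near0_mono; [apply (near0_poly4_pos (lin_gap0 Q false i1 i2 al be - C)
        (al * D1 + be * D2) 0 (al * D1) 0); lra|].
    intros d _ Hp. unfold poly4, lin_gap, lin_gap0, perturb, along, across, D1, D2 in *; simpl in *. nra.
Qed.

Definition stair_along (k N : nat) (e : bool) (j : nat) : R :=
  if Bool.eqb (Nat.even j) e then - stair_len k j else - stair_off k N j.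
Definition stair_across (k N : nat) (e : bool) (j : nat) : R :=
  if Bool.eqb (Nat.even j) e then - stair_off k N j else - stair_len k j.

Lemma along_stair_pt (k N : nat) (e : bool) (j : nat) : along e (stair_pt k N j) = stair_along k N e j.
Proof. unfold along, stair_pt, stair_along. destruct (Nat.even j), e; reflexivity. Qed.

Lemma across_stair_pt (k N : nat) (e : bool) (j : nat) :
  across e (stair_pt k N j) = stair_across k N e j.
Proof. unfold across, stair_pt, stair_across. destruct (Nat.even j), e; reflexivity. Qed.

Lemma lin_gap0_stair (k N : nat) (e : bool) (i j : nat) (al be : R) :
  lin_gap0 (stair k N) e (S i) (S j) al be
  = al * (stair_along k N e i - stair_along k N e j) + be * (stair_across k N e i - stair_across k N e j).
Proof. unfold lin_gap0. simpl stair. rewrite !along_stair_pt, !across_stair_pt. reflexivity. Qed.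

Lemma lin_gap0_origin (k N : nat) (e : bool) (j : nat) (al be : R) :
  lin_gap0 (stair k N) e 0 (S j) al be
  = al * (0 - stair_along k N e j) + be * (0 - stair_across k N e j).
Proof. unfold lin_gap0. simpl stair. rewrite along_stair_pt, across_stair_pt. destruct e; reflexivity. Qed.

Lemma eqb_even_refl (n : nat) : Bool.eqb (Nat.even n) (Nat.even n) = true.
Proof. destruct (Nat.even n); reflexivity. Qed.

Lemma eqb_even_succ (n : nat) : Bool.eqb (Nat.even (S n)) (Nat.even n) = false.
Proof. rewrite Nat.even_succ, <- Nat.negb_even. destruct (Nat.even n); reflexivity. Qed.

Lemma stair_coords_same (k N : nat) (e : bool) (j : nat) : Bool.eqb (Nat.even j) e = true ->
  stair_along k N e j = - stair_len k j /\ stair_across k N e j = - stair_off k N j.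
Proof. unfold stair_along, stair_across. intros H; rewrite H; split; reflexivity. Qed.

Lemma stair_coords_diff (k N : nat) (e : bool) (j : nat) : Bool.eqb (Nat.even j) e = false ->
  stair_along k N e j = - stair_off k N j /\ stair_across k N e j = - stair_len k j.
Proof. unfold stair_along, stair_across. intros H; rewrite H; split; reflexivity. Qed.

Lemma sin_h_eq (k : nat) : (1 <= k)%nat -> sin_h k = tan_h k * cos_h k.
Proof. intros Hk. param_facts_of k Hk. rewrite Ptd. field. lra. Qed.

(* Coordinates relative to [stair_pt n] along the axis of parity [e = even n]
   (the axis of its long coordinate [-g^n]).  The lemmas below are the strict
   inequalities of the unperturbed staircase that decide each routing step. *)

Lemma origin_ahead_gaps (k N n : nat) : (1 <= k)%nat -> (n <= 2 * N + 1)%nat ->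
  lin_gap0 (stair k N) (Nat.even n) 0 (S n) (sin_h k) (- cos_h k) > 0 /\
  lin_gap0 (stair k N) (Nat.even n) 0 (S n) (sin_h k) (cos_h k) > 0.
Proof.
  intros Hk Hkn. pose proof (sin_h_eq k Hk) as Est. param_facts_of k Hk.
  rewrite !lin_gap0_origin.
  destruct (stair_coords_same k N (Nat.even n) n (eqb_even_refl n)) as [E1 E2]. rewrite E1, E2.
  pose proof (slack_pos k N n Hk). pose proof (stair_off_bounds k N n Hk ltac:(lia)).
  pose proof (stair_len_pos k n Hk).
  unfold stair_off in *. rewrite Est. split; nra.
Qed.

(* The first inequality is where the slack is needed: without it
   [stair_pt (S n)] would lie on a boundary ray of the cone ahead of [stair_pt n],
   because [g (1 + t^2) = 2 t]. *)
Lemma next_ahead_gaps (k N n : nat) : (1 <= k)%nat -> (n + 1 <= 2 * N + 1)%nat ->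
  lin_gap0 (stair k N) (Nat.even n) (S (S n)) (S n) (sin_h k) (cos_h k) > 0 /\
  lin_gap0 (stair k N) (Nat.even n) (S (S n)) (S n) (sin_h k) (- cos_h k) > 0.
Proof.
  intros Hk Hkn. pose proof (sin_h_eq k Hk) as Est. pose proof (slack_succ k N n Hk) as Hms.
  pose proof (stair_off_bounds k N n Hk ltac:(lia)) as Ha0.
  pose proof (stair_off_bounds k N (S n) Hk ltac:(lia)) as Ha1.
  pose proof (stair_len_pos k n Hk) as HS.
  param_facts_of k Hk.
  rewrite !lin_gap0_stair.
  destruct (stair_coords_same k N (Nat.even n) n (eqb_even_refl n)) as [E1 E2].
  destruct (stair_coords_diff k N (Nat.even n) (S n) (eqb_even_succ n)) as [E3 E4].
  rewrite E1, E2, E3, E4, Est. unfold stair_off in *. rewrite stair_len_succ in *.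
  set (t := tan_h k) in *. set (g := shrink k) in *. set (L := stair_len k n) in *.
  set (m0 := slack k N n) in *. set (m1 := slack k N (S n)) in *.
  split.
  - assert (Hk1 : t * (L - (t * (g * L) - m1)) + (t * L - m0) - g * L = t * m1 - m0).
    { replace (t * (L - (t * (g * L) - m1)) + (t * L - m0) - g * L)
        with (L * (2 * t - g * (1 + t * t)) + t * m1 - m0) by ring.
      rewrite Pgt. ring. }
    assert (0 < cos_h k * (t * m1 - m0)) by (apply Rmult_lt_0_compat; lra).
    nra.
  - assert (t * L < g * L) by (apply Rmult_lt_compat_r; lra).
    assert (Htg : t * (g * L) < L).
    { assert ((t * g) * L < 1 * L) by (apply Rmult_lt_compat_r; lra). lra. }
    assert (0 < t * (L - (t * (g * L) - m1))) by (apply Rmult_lt_0_compat; lra).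
    assert (0 < cos_h k * (t * (L - (t * (g * L) - m1)) - (t * L - m0) + g * L))
      by (apply Rmult_lt_0_compat; lra).
    nra.
Qed.

Lemma next_before_origin_gap (k N n : nat) : (1 <= k)%nat -> (n + 1 <= 2 * N + 1)%nat ->
  lin_gap0 (stair k N) (Nat.even n) 0 (S (S n)) 1 0 > 0.
Proof.
  intros Hk Hkn. rewrite lin_gap0_origin.
  destruct (stair_coords_diff k N (Nat.even n) (S n) (eqb_even_succ n)) as [E3 E4]. rewrite E3.
  pose proof (stair_off_bounds k N (S n) Hk ltac:(lia)). lra.
Qed.

Lemma second_before_first_gap (k N n : nat) : (1 <= k)%nat ->
  lin_gap0 (stair k N) (Nat.even n) (S (S (S n))) (S n) 1 0 > 0.
Proof.
  intros Hk. rewrite lin_gap0_stair.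
  destruct (stair_coords_same k N (Nat.even n) (S (S n)) (eqb_even_refl n)) as [E1 E2].
  destruct (stair_coords_same k N (Nat.even n) n (eqb_even_refl n)) as [E3 E4]. rewrite E1, E3.
  pose proof (stair_len_lt k n (S (S n)) Hk ltac:(lia)). lra.
Qed.

(* The step from [stair_pt n] to [stair_pt (S n)] measured in the direction of
   the boundary ray it nearly follows: at least [cos 2h / cos h * g^n]. *)
Lemma step_length_gap (k N n : nat) : (1 <= k)%nat ->
  lin_gap0 (stair k N) (Nat.even n) (S (S n)) (S n) (cos_h k) (- sin_h k)
    >= cos (2 * half_theta k) / cos_h k * stair_len k n.
Proof.
  intros Hk. pose proof (sin_h_eq k Hk) as Est.
  pose proof (slack_pos k N n Hk). pose proof (slack_pos k N (S n) Hk).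
  rewrite lin_gap0_stair.
  destruct (stair_coords_same k N (Nat.even n) n (eqb_even_refl n)) as [E1 E2].
  destruct (stair_coords_diff k N (Nat.even n) (S n) (eqb_even_succ n)) as [E3 E4].
  rewrite E1, E2, E3, E4.
  param_facts_of k Hk. unfold stair_off. rewrite stair_len_succ.
  set (L := stair_len k n) in *.
  assert (E : cos_h k * (- (tan_h k * (shrink k * L) - slack k N (S n)) - - L) +
     - sin_h k * (- (shrink k * L) - - (tan_h k * L - slack k N n))
     = L * (cos_h k - sin_h k * tan_h k) + cos_h k * slack k N (S n) + sin_h k * slack k N n).
  { rewrite Est. ring. }
  rewrite E, Pcst.
  assert (0 < cos_h k * slack k N (S n)) by (apply Rmult_lt_0_compat; lra).
  assert (0 < sin_h k * slack k N n) by (apply Rmult_lt_0_compat; lra).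
  replace (cos (2 * half_theta k) / cos_h k * L) with (L * (cos (2 * half_theta k) / cos_h k)) by ring.
  lra.
Qed.

(* The remaining staircase points are either outside the cone ahead of
   [stair_pt n] or not closer than [stair_pt (S n)]. *)
Lemma later_same_parity_gap (k N n i : nat) : (1 <= k)%nat ->
  Bool.eqb (Nat.even i) (Nat.even n) = true -> (n < i)%nat ->
  lin_gap0 (stair k N) (Nat.even n) (S i) (S n) (- tan_h k) 1 > 0.
Proof.
  intros Hk He Hi. rewrite lin_gap0_stair.
  destruct (stair_coords_same k N (Nat.even n) n (eqb_even_refl n)) as [E1 E2].
  destruct (stair_coords_same k N (Nat.even n) i He) as [E3 E4]. rewrite E1, E2, E3, E4.
  pose proof (slack_lt k N n i Hk Hi). unfold stair_off. lra.
Qed.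

Lemma earlier_same_parity_gap (k N n i : nat) : (1 <= k)%nat ->
  Bool.eqb (Nat.even i) (Nat.even n) = true -> (i < n)%nat ->
  lin_gap0 (stair k N) (Nat.even n) (S n) (S i) 1 0 > 0.
Proof.
  intros Hk He Hi. rewrite lin_gap0_stair.
  destruct (stair_coords_same k N (Nat.even n) n (eqb_even_refl n)) as [E1 E2].
  destruct (stair_coords_same k N (Nat.even n) i He) as [E3 E4]. rewrite E1, E3.
  pose proof (stair_len_lt k i n Hk Hi). lra.
Qed.

Lemma later_other_parity_gap (k N n i : nat) : (1 <= k)%nat ->
  Bool.eqb (Nat.even i) (Nat.even n) = false -> (S n < i)%nat ->
  lin_gap0 (stair k N) (Nat.even n) (S i) (S (S n)) 1 0 > 0.
Proof.
  intros Hk He Hi. rewrite lin_gap0_stair.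
  destruct (stair_coords_diff k N (Nat.even n) (S n) (eqb_even_succ n)) as [E1 E2].
  destruct (stair_coords_diff k N (Nat.even n) i He) as [E3 E4]. rewrite E1, E3.
  pose proof (stair_off_lt k N (S n) i Hk Hi). lra.
Qed.

Lemma earlier_other_parity_gap (k N n i : nat) : (1 <= k)%nat -> (n <= 2 * N + 1)%nat ->
  Bool.eqb (Nat.even i) (Nat.even n) = false -> (i < n)%nat ->
  lin_gap0 (stair k N) (Nat.even n) (S i) (S n) (- tan_h k) (-1) > 0.
Proof.
  intros Hk Hkn He Hi. rewrite lin_gap0_stair.
  destruct (stair_coords_same k N (Nat.even n) n (eqb_even_refl n)) as [E1 E2].
  destruct (stair_coords_diff k N (Nat.even n) i He) as [E3 E4]. rewrite E1, E2, E3, E4.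
  pose proof (stair_off_bounds k N n Hk ltac:(lia)) as Ha.
  pose proof (stair_off_bounds k N i Hk ltac:(lia)) as Hai.
  assert (HSk : stair_len k n = shrink k * stair_len k (n - 1)).
  { unfold stair_len. replace n with (S (n - 1)) at 1 by lia. reflexivity. }
  assert (HSi : stair_len k (n - 1) <= stair_len k i).
  { destruct (Nat.eq_dec i (n - 1)) as [E|Ne]; [rewrite E; lra|].
    left. apply stair_len_lt; [exact Hk | lia]. }
  pose proof (stair_len_pos k (n - 1) Hk) as HS1.
  param_facts_of k Hk.
  rewrite HSk in *. set (L := stair_len k (n - 1)) in *.
  assert (H1 : tan_h k * (shrink k * L) * 2 < L).
  { assert ((2 * tan_h k * shrink k) * L < 1 * L) by (apply Rmult_lt_compat_r; lra). lra. }
  assert (0 < tan_h k * stair_off k N i) by (apply Rmult_lt_0_compat; lra).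
  lra.
Qed.

Lemma Rabs_lt_of_two (c L P : R) : 0 < c -> P - c * L > 0 -> P + c * L > 0 -> c * Rabs L < P.
Proof. intros Hc H1 H2. unfold Rabs; destruct (Rcase_abs L); nra. Qed.

Lemma in_cone_ahead_of_gaps (k : nat) (Q : nat -> point) (d : R) (e : bool) (a b : nat) :
  (1 <= k)%nat ->
  lin_gap Q d e a b (sin_h k) (- cos_h k) > 0 -> lin_gap Q d e a b (sin_h k) (cos_h k) > 0 ->
  in_cone (4 * k + 4) (perturb Q d b) (cone_ahead k e) (perturb Q d a).
Proof.
  intros Hk H1 H2. param_facts_of k Hk. unfold lin_gap in *.
  apply in_cone_ahead_iff; [exact Hk|]. fold (cos_h k) (sin_h k).
  assert (Hp : 0 < along e (perturb Q d a) - along e (perturb Q d b)).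
  { apply (Rmult_lt_reg_l (sin_h k)); lra. }
  split; [intro E; rewrite E in Hp; lra|]. split; [exact Hp|].
  apply Rabs_lt_of_two; lra.
Qed.

Lemma in_cone_behind_of_gaps (k : nat) (Q : nat -> point) (d : R) (e : bool) (a b : nat) :
  (1 <= k)%nat ->
  lin_gap Q d e b a (sin_h k) (- cos_h k) > 0 -> lin_gap Q d e b a (sin_h k) (cos_h k) > 0 ->
  in_cone (4 * k + 4) (perturb Q d b) (cone_behind k e) (perturb Q d a).
Proof.
  intros Hk H1 H2. param_facts_of k Hk. unfold lin_gap in *.
  apply in_cone_behind_iff; [exact Hk|]. fold (cos_h k) (sin_h k).
  assert (Hp : 0 < along e (perturb Q d b) - along e (perturb Q d a)).
  { apply (Rmult_lt_reg_l (sin_h k)); lra. }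
  split; [intro E; rewrite E in Hp; lra|]. split; [exact Hp|].
  apply Rabs_lt_of_two; lra.
Qed.

Lemma near0_next_closest (k N n j : nat) : (1 <= k)%nat -> (n + 2 <= 2 * N + 1)%nat ->
  (j < 2 * N + 3)%nat ->
  near0 (fun d =>
    let P := perturb (stair k N) d in let a := cone_ahead k (Nat.even n) in
    in_cone (4 * k + 4) (P (S n)) a (P j) ->
    proj (4 * k + 4) (P (S n)) a (P (S (S n))) <= proj (4 * k + 4) (P (S n)) a (P j)).
Proof.
  intros Hk Hn Hj. cbv zeta.
  pose proof (sin_h_eq k Hk) as Est.
  set (Q := stair k N). set (e := Nat.even n).
  destruct j as [|i].
  { eapply near0_mono; [apply near0_lin_gap; apply (next_before_origin_gap k N n Hk ltac:(lia))|].
    intros d _ HL _. rewrite !proj_ahead. unfold lin_gap in HL. fold Q e in HL. lra. }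
  destruct (Nat.eq_dec i n) as [Ein|Nin].
  { subst i. apply near0_always. intros d Hc. apply in_cone_ahead_iff in Hc; [|exact Hk]. tauto. }
  destruct (Nat.eq_dec i (S n)) as [Ein'|Nin'].
  { subst i. apply near0_always. intros d _. lra. }
  destruct (Bool.eqb (Nat.even i) e) eqn:Epar; destruct (Nat.lt_ge_cases n i) as [Hlt|Hge].
  - eapply near0_mono; [apply near0_lin_gap; apply (later_same_parity_gap k N n i Hk Epar Hlt)|].
    intros d _ HL Hc. exfalso. apply in_cone_ahead_iff in Hc; [|exact Hk]. destruct Hc as [_ [Hp Hl]].
    unfold lin_gap in HL. fold Q e in HL. fold (cos_h k) (sin_h k) in Hl. param_facts_of k Hk.
    set (dp := along e (perturb Q d (S i)) - along e (perturb Q d (S n))) in *.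
    set (dl := across e (perturb Q d (S i)) - across e (perturb Q d (S n))) in *.
    assert (cos_h k * dl > sin_h k * dp) by (rewrite Est; nra).
    pose proof (RRle_abs dl). nra.
  - eapply near0_mono; [apply near0_lin_gap; apply (earlier_same_parity_gap k N n i Hk Epar ltac:(lia))|].
    intros d _ HL Hc. exfalso. apply in_cone_ahead_iff in Hc; [|exact Hk]. destruct Hc as [_ [Hp Hl]].
    unfold lin_gap in HL. fold Q e in HL. lra.
  - eapply near0_mono; [apply near0_lin_gap; apply (later_other_parity_gap k N n i Hk Epar ltac:(lia))|].
    intros d _ HL _. rewrite !proj_ahead. unfold lin_gap in HL. fold Q e in HL. lra.
  - eapply near0_mono;
      [apply near0_lin_gap; apply (earlier_other_parity_gap k N n i Hk ltac:(lia) Epar ltac:(lia))|].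
    intros d _ HL Hc. exfalso. apply in_cone_ahead_iff in Hc; [|exact Hk]. destruct Hc as [_ [Hp Hl]].
    unfold lin_gap in HL. fold Q e in HL. fold (cos_h k) (sin_h k) in Hl. param_facts_of k Hk.
    set (dp := along e (perturb Q d (S i)) - along e (perturb Q d (S n))) in *.
    set (dl := across e (perturb Q d (S i)) - across e (perturb Q d (S n))) in *.
    assert (cos_h k * (- dl) > sin_h k * dp) by (rewrite Est; nra).
    assert (- dl <= Rabs dl) by (rewrite <- Rabs_Ropp; apply RRle_abs). nra.
Qed.

Lemma pdist_ge_rotated (co s : R) (e : bool) (x y : point) : co * co + s * s = 1 ->
  co * (along e y - along e x) - s * (across e y - across e x) <= pdist x y.
Proof.
  intros Hcs. unfold pdist.
  set (a := along e y - along e x). set (b := across e y - across e x).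
  replace ((fst y - fst x) ^ 2 + (snd y - snd x) ^ 2) with (a * a + b * b)
    by (unfold a, b; destruct e; simpl; ring).
  destruct (Rle_dec (co * a - s * b) 0) as [Hn|Hp]; [pose proof (sqrt_pos (a * a + b * b)); lra|].
  apply le_sqrt_of_sq_le; [lra|].
  pose proof (pow2_ge_0 (co * b + s * a)).
  replace (a * a + b * b) with ((co * co + s * s) * (a * a + b * b)) by (rewrite Hcs; ring).
  nra.
Qed.

(* Everything needed for routing to go from [stair_pt n] to [stair_pt (S n)]:
   the origin [P 0] lies in the cone ahead of [stair_pt n], whose closest point is
   [stair_pt (S n)] and not the origin; and [stair_pt n] lies in the cone behind
   the origin, where [stair_pt (S (S n))] is closer, so the origin has no edge to
   [stair_pt n] either. *)
Definition zigzag_step (k N : nat) (tau d : R) (n : nat) : Prop :=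
  let P := perturb (stair k N) d in
  let a := cone_ahead k (Nat.even n) in let b := cone_behind k (Nat.even n) in
  in_cone (4 * k + 4) (P (S n)) a (P O) /\
  in_cone (4 * k + 4) (P (S n)) a (P (S (S n))) /\
  proj (4 * k + 4) (P (S n)) a (P (S (S n))) < proj (4 * k + 4) (P (S n)) a (P O) /\
  (forall j, (j < 2 * N + 3)%nat -> in_cone (4 * k + 4) (P (S n)) a (P j) ->
     proj (4 * k + 4) (P (S n)) a (P (S (S n))) <= proj (4 * k + 4) (P (S n)) a (P j)) /\
  in_cone (4 * k + 4) (P O) b (P (S n)) /\
  in_cone (4 * k + 4) (P O) b (P (S (S (S n)))) /\
  proj (4 * k + 4) (P O) b (P (S (S (S n)))) < proj (4 * k + 4) (P O) b (P (S n)) /\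
  pdist (P (S n)) (P (S (S n))) >= (1 - tau) * (cos (2 * half_theta k) / cos_h k * stair_len k n).

Lemma near0_zigzag_step (k N : nat) (tau : R) (n : nat) : (1 <= k)%nat -> 0 < tau < 1 ->
  (n + 2 <= 2 * N + 1)%nat -> near0 (fun d => zigzag_step k N tau d n).
Proof.
  intros Hk Htau Hn.
  destruct (origin_ahead_gaps k N n Hk ltac:(lia)) as [B1a B1b].
  destruct (next_ahead_gaps k N n Hk ltac:(lia)) as [B2a B2b].
  pose proof (next_before_origin_gap k N n Hk ltac:(lia)) as B3.
  destruct (origin_ahead_gaps k N (S (S n)) Hk ltac:(lia)) as [B4a B4b].
  change (Nat.even (S (S n))) with (Nat.even n) in B4a, B4b.
  pose proof (second_before_first_gap k N n Hk) as B5.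
  pose proof (step_length_gap k N n Hk) as B6.
  assert (Hpos : 0 < cos (2 * half_theta k) / cos_h k * stair_len k n).
  { param_facts_of k Hk. pose proof (stair_len_pos k n Hk).
    apply Rmult_lt_0_compat; [apply Rdiv_lt_0_compat|]; lra. }
  assert (B6' : lin_gap0 (stair k N) (Nat.even n) (S (S n)) (S n) (cos_h k) (- sin_h k)
                > (1 - tau) * (cos (2 * half_theta k) / cos_h k * stair_len k n)) by nra.
  apply near0_lin_gap in B1a, B1b, B2a, B2b, B3, B4a, B4b, B5, B6'.
  pose proof (near0_forall_lt (2 * N + 3) _ (fun j Hj => near0_next_closest k N n j Hk Hn Hj))
    as B7.
  pose proof (near0_and _ _ B1a (near0_and _ _ B1b (near0_and _ _ B2a (near0_and _ _ B2b
    (near0_and _ _ B3 (near0_and _ _ B4a (near0_and _ _ B4b (near0_and _ _ B5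
    (near0_and _ _ B6' B7))))))))) as Hall.
  eapply near0_mono; [exact Hall|]. intros d _ HH. cbv zeta in HH.
  destruct HH as [A1 [A2 [A3 [A4 [A5 [A6 [A7 [A8 [A9 A10]]]]]]]]].
  unfold zigzag_step. cbv zeta.
  unfold lin_gap in A1, A2, A3, A4, A5, A6, A7, A8, A9.
  set (P := perturb (stair k N) d) in *. set (e := Nat.even n) in *.
  param_facts_of k Hk.
  split; [apply in_cone_ahead_of_gaps; [exact Hk | |]; unfold lin_gap; fold P; lra|].
  split; [apply in_cone_ahead_of_gaps; [exact Hk | |]; unfold lin_gap; fold P; lra|].
  split; [rewrite !proj_ahead; lra|].
  split; [exact A10|].
  split; [apply in_cone_behind_of_gaps; [exact Hk | |]; unfold lin_gap; fold P; lra|].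
  split; [apply in_cone_behind_of_gaps; [exact Hk | |]; unfold lin_gap; fold P; lra|].
  split; [rewrite !proj_behind; lra|].
  pose proof (pdist_ge_rotated (cos_h k) (sin_h k) e (P (S n)) (P (S (S n))) Pcs). lra.
Qed.

Lemma pert_coef_sub_neq0 (i j : nat) : i <> j -> pert_coef j - pert_coef i <> 0.
Proof. intros H E. unfold pert_coef in E. apply H. apply INR_eq. lra. Qed.

Lemma pert_coef_sq_sub_neq0 (i j : nat) : i <> j -> pert_coef j ^ 2 - pert_coef i ^ 2 <> 0.
Proof.
  intros H. replace (pert_coef j ^ 2 - pert_coef i ^ 2)
    with ((pert_coef j - pert_coef i) * (pert_coef j + pert_coef i)) by ring.
  unfold pert_coef at 3 4. pose proof (pos_INR i); pose proof (pos_INR j).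
  apply Rmult_integral_contrapositive; split; [apply pert_coef_sub_neq0; exact H | lra].
Qed.

Lemma sin_cos_not_both_zero (b : R) : cos b <> 0 \/ sin b <> 0.
Proof.
  destruct (Req_dec (cos b) 0) as [Ec|Nc]; [right | left; exact Nc].
  pose proof (sin2_cos2 b) as X. unfold Rsqr in X. rewrite Ec in X. intro Es. rewrite Es in X. lra.
Qed.

Lemma near0_cross_neq0 (Q : nat -> point) (i j : nat) (b : R) : i <> j ->
  near0 (fun d => cross (vsub (perturb Q d j) (perturb Q d i)) (dir b) <> 0).
Proof.
  intros Hij.
  set (D1 := pert_coef j - pert_coef i). set (D2 := pert_coef j ^ 2 - pert_coef i ^ 2).
  pose proof (pert_coef_sub_neq0 i j Hij) as H1. pose proof (pert_coef_sq_sub_neq0 i j Hij) as H2.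
  fold D1 in H1. fold D2 in H2.
  eapply near0_mono.
  - apply (near0_poly4_neq0 (cross (vsub (Q j) (Q i)) (dir b))
      (D1 * cos b - D2 * sin b) 0 (D1 * cos b) 0).
    destruct (sin_cos_not_both_zero b) as [Nc|Ns].
    + right; right; right. apply Rmult_integral_contrapositive; split; assumption.
    + destruct (Req_dec (cos b) 0) as [Ec|Nc];
        [| right; right; right; apply Rmult_integral_contrapositive; split; assumption].
      right; left. rewrite Ec. replace (D1 * 0 - D2 * sin b) with (- (D2 * sin b)) by ring.
      apply Ropp_neq_0_compat. apply Rmult_integral_contrapositive; split; assumption.
  - intros d _ Hp HZ. apply Hp. etransitivity; [|exact HZ].
    unfold poly4, cross, vsub, perturb, dir, D1, D2; simpl. ring.
Qed.

Lemma near0_dot_neq0 (Q : nat -> point) (i j : nat) (b : R) : i <> j ->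
  near0 (fun d => dot (vsub (perturb Q d j) (perturb Q d i)) (dir b) <> 0).
Proof.
  intros Hij.
  set (D1 := pert_coef j - pert_coef i). set (D2 := pert_coef j ^ 2 - pert_coef i ^ 2).
  pose proof (pert_coef_sub_neq0 i j Hij) as H1. pose proof (pert_coef_sq_sub_neq0 i j Hij) as H2.
  fold D1 in H1. fold D2 in H2.
  eapply near0_mono.
  - apply (near0_poly4_neq0 (dot (vsub (Q j) (Q i)) (dir b))
      (D1 * sin b + D2 * cos b) 0 (D1 * sin b) 0).
    destruct (sin_cos_not_both_zero b) as [Nc|Ns].
    + destruct (Req_dec (sin b) 0) as [Es|Ns];
        [| right; right; right; apply Rmult_integral_contrapositive; split; assumption].
      right; left. rewrite Es. replace (D1 * 0 + D2 * cos b) with (D2 * cos b) by ring.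
      apply Rmult_integral_contrapositive; split; assumption.
    + right; right; right. apply Rmult_integral_contrapositive; split; assumption.
  - intros d _ Hp HZ. apply Hp. etransitivity; [|exact HZ].
    unfold poly4, dot, vsub, perturb, dir, D1, D2; simpl. ring.
Qed.

Lemma near0_not_collinear (Q : nat -> point) (a b c : nat) : a <> b -> a <> c -> b <> c ->
  near0 (fun d =>
    cross (vsub (perturb Q d b) (perturb Q d a)) (vsub (perturb Q d c) (perturb Q d a)) <> 0).
Proof.
  intros Hab Hac Hbc.
  set (X1 := fst (Q b) - fst (Q a)). set (Y1 := snd (Q b) - snd (Q a)).
  set (X2 := fst (Q c) - fst (Q a)). set (Y2 := snd (Q c) - snd (Q a)).
  set (C1 := pert_coef b - pert_coef a). set (C2 := pert_coef c - pert_coef a).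
  set (E1 := pert_coef b ^ 2 - pert_coef a ^ 2). set (E2 := pert_coef c ^ 2 - pert_coef a ^ 2).
  eapply near0_mono.
  - apply (near0_poly4_neq0 (X1 * Y2 - Y1 * X2) (X1 * E2 + C1 * Y2 - Y1 * C2 - E1 * X2)
      (C1 * E2 - E1 * C2) (C1 * Y2 - Y1 * C2) (C1 * E2 - E1 * C2)).
    right; right; left.
    replace (C1 * E2 - E1 * C2)
      with ((pert_coef b - pert_coef a) * (pert_coef c - pert_coef a) * (pert_coef c - pert_coef b))
      by (unfold C1, C2, E1, E2; ring).
    apply Rmult_integral_contrapositive; split; [apply Rmult_integral_contrapositive; split|];
      apply pert_coef_sub_neq0; auto.
  - intros d _ Hp HZ. apply Hp. etransitivity; [|exact HZ].
    unfold poly4, cross, vsub, perturb, X1, Y1, X2, Y2, C1, C2, E1, E2; simpl. ring.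
Qed.

Definition perturb_list (Q : nat -> point) (d : R) (M : nat) : list point :=
  map (perturb Q d) (seq 0 M).

Lemma in_perturb_list (Q : nat -> point) (d : R) (M : nat) (p : point) :
  In p (perturb_list Q d M) -> exists i, (i < M)%nat /\ p = perturb Q d i.
Proof.
  intros H. apply in_map_iff in H. destruct H as [i [E Hi]]. apply in_seq in Hi.
  exists i. split; [lia | auto].
Qed.

Lemma perturb_in_list (Q : nat -> point) (d : R) (M i : nat) :
  (i < M)%nat -> In (perturb Q d i) (perturb_list Q d M).
Proof. intros Hi. apply in_map. apply in_seq. lia. Qed.

Lemma near0_general_position (Q : nat -> point) (m M : nat) :
  near0 (fun d => general_position m (perturb_list Q d M)).
Proof.
  assert (Hpair : near0 (fun d => forall i, (i < M)%nat -> forall j, (j < M)%nat -> i <> j ->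
     forall l, (l < m)%nat ->
     cross (vsub (perturb Q d j) (perturb Q d i)) (dir ((2 * INR l + 1) * theta m / 2)) <> 0 /\
     dot (vsub (perturb Q d j) (perturb Q d i)) (bisector m l) <> 0)).
  { apply near0_forall_lt. intros i _. apply near0_forall_lt. intros j _.
    destruct (Nat.eq_dec i j) as [E|Ne]; [apply near0_always; intros d Hne; contradiction|].
    eapply near0_mono.
    - apply near0_forall_lt. intros l _.
      apply near0_and; [apply near0_cross_neq0 | apply near0_dot_neq0]; exact Ne.
    - intros d _ H _. exact H. }
  assert (Htriple : near0 (fun d => forall a, (a < M)%nat -> forall b, (b < M)%nat ->
     forall c, (c < M)%nat -> a <> b -> a <> c -> b <> c ->
     cross (vsub (perturb Q d b) (perturb Q d a)) (vsub (perturb Q d c) (perturb Q d a)) <> 0)).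
  { apply near0_forall_lt. intros a _. apply near0_forall_lt. intros b _.
    apply near0_forall_lt. intros c _.
    destruct (Nat.eq_dec a b) as [E1|N1]; [apply near0_always; intros d X; contradiction|].
    destruct (Nat.eq_dec a c) as [E2|N2]; [apply near0_always; intros d _ X; contradiction|].
    destruct (Nat.eq_dec b c) as [E3|N3]; [apply near0_always; intros d _ _ X; contradiction|].
    eapply near0_mono; [apply (near0_not_collinear Q a b c N1 N2 N3)|]. intros d _ H _ _ _. exact H. }
  eapply near0_mono; [exact (near0_and _ _ Hpair Htriple)|]. intros d _ [G1 G2].
  split; [|split].
  - intros u v j Hu Hv Huv Hj.
    destruct (in_perturb_list Q d M u Hu) as [i1 [Hi1 ->]].
    destruct (in_perturb_list Q d M v Hv) as [i2 [Hi2 ->]].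
    apply (G1 i1 Hi1 i2 Hi2); [intro E; subst; contradiction | exact Hj].
  - intros u v j Hu Hv Huv Hj.
    destruct (in_perturb_list Q d M u Hu) as [i1 [Hi1 ->]].
    destruct (in_perturb_list Q d M v Hv) as [i2 [Hi2 ->]].
    apply (G1 i1 Hi1 i2 Hi2); [intro E; subst; contradiction | exact Hj].
  - intros u v w Hu Hv Hw Huv Huw Hvw.
    destruct (in_perturb_list Q d M u Hu) as [i1 [Hi1 ->]].
    destruct (in_perturb_list Q d M v Hv) as [i2 [Hi2 ->]].
    destruct (in_perturb_list Q d M w Hw) as [i3 [Hi3 ->]].
    apply G2; auto; intro E; subst; contradiction.
Qed.

Lemma path_length_ge0 (l : list point) : 0 <= path_length l.
Proof.
  induction l as [|x l IH]; simpl; [lra|].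
  destruct l as [|y l']; [lra|]. pose proof (sqrt_pos ((fst y - fst x) ^ 2 + (snd y - snd x) ^ 2)).
  unfold pdist. lra.
Qed.

Lemma zigzag_route_step (k N : nat) (tau d : R) (n : nat) : (1 <= k)%nat ->
  (n < 2 * N)%nat -> zigzag_step k N tau d n ->
  let P := perturb (stair k N) d in
  route_step (perturb_list (stair k N) d (2 * N + 3)) (4 * k + 4) (P O) (P (S n)) (P (S (S n))).
Proof.
  intros Hk Hn Hstep P.
  destruct Hstep as [A1 [A2 [A3 [A4 [A5 [A6 [A7 _]]]]]]]. fold P in A1, A2, A3, A4, A5, A6, A7.
  assert (HPl : forall i, (i < 2 * N + 3)%nat -> In (P i) (perturb_list (stair k N) d (2 * N + 3)))
    by (intros i Hi; apply perturb_in_list; exact Hi).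
  right. split.
  - intros [i [[_ [Hci Hmin]] | [_ [Hci Hmin]]]].
    + pose proof (in_cone_unique k _ _ _ _ Hk Hci A1) as Ei. subst i.
      specialize (Hmin (P (S (S n))) (HPl (S (S n)) ltac:(lia)) A2). lra.
    + pose proof (in_cone_unique k _ _ _ _ Hk Hci A5) as Ei. subst i.
      specialize (Hmin (P (S (S (S n)))) (HPl (S (S (S n))) ltac:(lia)) A6). lra.
  - exists (cone_ahead k (Nat.even n)). split; [exact A1|].
    split; [apply HPl; lia|]. split; [exact A2|].
    intros z Hz Hcz. destruct (in_perturb_list _ _ _ z Hz) as [j [Hj ->]]. apply A4; assumption.
Qed.

(* [stair_len k n] summed over the remaining steps [n <= j < 2N], times the
   lower bound [(1 - tau) cos 2h / cos h] of [step_length_gap]. *)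
Definition zigzag_length (k N : nat) (tau : R) (n : nat) : R :=
  (1 - tau) * (cos (2 * half_theta k) / cos_h k) * (shrink k ^ n - shrink k ^ (2 * N)) / (1 - shrink k).

Lemma zigzag_routing (k N : nat) (tau d : R) : (1 <= k)%nat ->
  general_position (4 * k + 4) (perturb_list (stair k N) d (2 * N + 3)) ->
  (forall n, (n < 2 * N)%nat -> zigzag_step k N tau d n) ->
  forall r n, (n + r = 2 * N)%nat ->
  exists l, routing_path (perturb_list (stair k N) d (2 * N + 3)) (4 * k + 4)
              (perturb (stair k N) d O) (perturb (stair k N) d (S n)) l /\
            path_length l >= zigzag_length k N tau n.
Proof.
  intros Hk HGP Hsteps.
  set (P := perturb (stair k N) d) in *. set (Pl := perturb_list (stair k N) d (2 * N + 3)) in *.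
  param_facts_of k Hk.
  induction r as [|r IH]; intros n Hnr.
  - destruct (routing_path_exists k Pl (P O) (P (S n)) Hk HGP) as [l Hl];
      [apply perturb_in_list; lia .. |].
    exists l. split; [exact Hl|]. pose proof (path_length_ge0 l).
    unfold zigzag_length. replace n with (2 * N)%nat by lia. unfold Rminus. rewrite Rplus_opp_r.
    unfold Rdiv. rewrite Rmult_0_r, Rmult_0_l. lra.
  - destruct (IH (S n) ltac:(lia)) as [l [Hl Hlen]].
    pose proof (Hsteps n ltac:(lia)) as Hstep.
    pose proof (zigzag_route_step k N tau d n Hk ltac:(lia) Hstep) as Hroute.
    destruct Hstep as [A1 [_ [_ [_ [_ [_ [_ A8]]]]]]]. fold P in A1, A8, Hroute.
    apply in_cone_iff in A1. destruct A1 as [_ [Hxw _]].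
    exists (P (S n) :: l). split; [apply rp_step with (P (S (S n))); auto|].
    destruct (routing_path_cons _ _ _ _ _ Hl) as [l' ->].
    change (path_length (P (S n) :: P (S (S n)) :: l'))
      with (pdist (P (S n)) (P (S (S n))) + path_length (P (S (S n)) :: l')).
    unfold zigzag_length in *.
    set (c := (1 - tau) * (cos (2 * half_theta k) / cos_h k)) in *.
    replace (c * (shrink k ^ n - shrink k ^ (2 * N)) / (1 - shrink k))
      with (c * stair_len k n + c * (shrink k ^ S n - shrink k ^ (2 * N)) / (1 - shrink k))
      by (unfold stair_len; simpl; field; lra).
    replace ((1 - tau) * (cos (2 * half_theta k) / cos_h k * stair_len k n))
      with (c * stair_len k n) in A8 by (unfold c; ring).
    lra.
Qed.

(* [cos 2h / (1 - sin 2h) = (cos h + sin h) / (cos h - sin h)]: the geometric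
   series of the step lengths sums to the ratio [R]. *)
Lemma zigzag_length_start (k N : nat) (tau : R) : (1 <= k)%nat ->
  zigzag_length k N tau 0 = (1 - tau) * (1 - shrink k ^ (2 * N)) * ratio_R (4 * k + 4) / cos_h k.
Proof.
  intros Hk. rewrite ratio_R_eq by exact Hk. fold (cos_h k) (sin_h k).
  param_facts_of k Hk. unfold zigzag_length.
  assert (E : 1 - shrink k = (cos_h k - sin_h k) * (cos_h k - sin_h k)) by (rewrite Pg; nra).
  rewrite E, PcT. simpl pow. field. lra.
Qed.

Lemma pdist_lt_of_in_cone (k : nat) (x p : point) (i : nat) :
  in_cone (4 * k + 4) x i p -> pdist x p * cos (half_theta k) < proj (4 * k + 4) x i p.
Proof.
  intros [_ [_ H]]. unfold proj. rewrite theta_eq in H.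
  replace (2 * half_theta k / 2) with (half_theta k) in H by field. exact H.
Qed.

Lemma tight_parameters (RR eps g : R) : 0 < RR -> eps > 0 -> 0 < g < 1 ->
  exists (tau : R) (N : nat), 0 < tau < 1 /\ (1 <= N)%nat /\
    (RR - eps) * (1 + tau) <= (1 - tau) * (1 - g ^ (2 * N)) * RR.
Proof.
  intros HR Heps Hg.
  set (e1 := Rmin (eps / (2 * RR)) (1 / 2)).
  assert (He1 : 0 < e1) by (apply Rmin_glb_lt; [apply Rdiv_lt_0_compat|]; lra).
  assert (He1a : 2 * RR * e1 <= eps).
  { assert (H : e1 <= eps / (2 * RR)) by apply Rmin_l.
    apply Rmult_le_compat_l with (r := 2 * RR) in H; [|lra].
    replace (2 * RR * (eps / (2 * RR))) with eps in H by (field; lra). exact H. }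
  assert (He1b : e1 <= 1 / 2) by apply Rmin_r.
  destruct (pow_lt_1_zero g ltac:(rewrite Rabs_pos_eq; lra) e1 He1) as [N0 HN0].
  exists (e1 / 2), (N0 + 1)%nat. split; [lra|]. split; [lia|].
  specialize (HN0 (2 * (N0 + 1))%nat ltac:(lia)).
  rewrite Rabs_pos_eq in HN0 by (apply pow_le; lra).
  assert (HG0 : 0 <= g ^ (2 * (N0 + 1))) by (apply pow_le; lra).
  assert ((RR - eps) * (1 + e1 / 2) <= RR * ((1 - 2 * e1) * (1 + e1 / 2)))
    by (rewrite <- Rmult_assoc; apply Rmult_le_compat_r; lra).
  assert (RR * ((1 - 2 * e1) * (1 + e1 / 2)) <= RR * ((1 - e1 / 2) * (1 - g ^ (2 * (N0 + 1)))))
    by (apply Rmult_le_compat_l; nra).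
  lra.
Qed.

Lemma stretch_of_bounds (RR eps tau c A D L : R) : 0 < c -> 0 <= D -> 0 <= A ->
  D * c < 1 + tau -> A <= L * c -> (RR - eps) * (1 + tau) <= A -> (RR - eps) * D <= L.
Proof.
  intros Hc HD HA Hdist Hlen Hfac.
  apply Rmult_le_reg_r with c; [exact Hc|].
  destruct (Rle_dec (RR - eps) 0) as [Hneg|Hpos].
  - assert (0 <= D * c) by (apply Rmult_le_pos; lra). nra.
  - assert ((RR - eps) * (D * c) <= (RR - eps) * (1 + tau)) by (apply Rmult_le_compat_l; lra).
    nra.
Qed.

Theorem routing_stretch_tight (k : nat) (eps : R) : (1 <= k)%nat -> eps > 0 ->
  exists (P : list point) (u w : point),
    general_position (4 * k + 4) P /\ In u P /\ In w P /\ u <> w /\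
    exists l, routing_path P (4 * k + 4) w u l /\
      path_length l >= (ratio_R (4 * k + 4) - eps) * pdist u w.
Proof.
  intros Hk Heps. param_facts_of k Hk.
  assert (HR : 0 < ratio_R (4 * k + 4))
    by (rewrite ratio_R_eq by exact Hk; apply Rdiv_lt_0_compat; fold (cos_h k) (sin_h k); lra).
  destruct (tight_parameters _ eps (shrink k) HR Heps (conj Pgpos Pg1)) as [tau [N [Htau [HN Hfac]]]].
  set (Q := stair k N).
  assert (HL0 : lin_gap0 Q true 0 1 (-1) 0 > - (1 + tau))
    by (unfold Q; rewrite lin_gap0_origin; unfold stair_along, stair_len; simpl; lra).
  assert (Hev : near0 (fun d => (forall n, (n < 2 * N)%nat -> zigzag_step k N tau d n) /\
                 general_position (4 * k + 4) (perturb_list Q d (2 * N + 3)) /\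
                 lin_gap Q d true 0 1 (-1) 0 > - (1 + tau))).
  { apply near0_and;
      [|apply near0_and; [apply near0_general_position | apply near0_lin_gap; exact HL0]].
    apply near0_forall_lt. intros n Hn. apply near0_zigzag_step; [exact Hk | exact Htau | lia]. }
  destruct Hev as [eta [Heta Hd]].
  destruct (Hd (eta / 2) ltac:(lra)) as [Hsteps [HGP HLd]]. set (d := eta / 2) in *.
  destruct (Hsteps 0%nat ltac:(lia)) as [A1 _]. cbv zeta in A1. fold Q in A1.
  set (u := perturb Q d 1%nat) in *. set (w := perturb Q d 0%nat) in *.
  exists (perturb_list Q d (2 * N + 3)), u, w.
  split; [exact HGP|]. split; [apply perturb_in_list; lia|]. split; [apply perturb_in_list; lia|].
  split; [apply in_cone_iff in A1; destruct A1 as [_ [Hne _]]; congruence|].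
  destruct (zigzag_routing k N tau d Hk HGP Hsteps (2 * N) 0 ltac:(lia)) as [l [Hl Hlen]].
  exists l. split; [exact Hl|].
  rewrite zigzag_length_start in Hlen by exact Hk.
  assert (Hdist : pdist u w * cos_h k < 1 + tau).
  { pose proof (pdist_lt_of_in_cone k u w _ A1) as H. rewrite proj_ahead in H.
    unfold lin_gap in HLd. fold u w in HLd. simpl Nat.even in H. fold (cos_h k) in H. lra. }
  apply Rle_ge, (stretch_of_bounds _ _ tau (cos_h k)
    ((1 - tau) * (1 - shrink k ^ (2 * N)) * ratio_R (4 * k + 4))); try assumption.
  - apply sqrt_pos.
  - pose proof (pow_lt_1_compat (shrink k) (2 * N) ltac:(lra) ltac:(lia)).
    apply Rmult_le_pos; [apply Rmult_le_pos|]; lra.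
  - apply Rge_le in Hlen.
    apply Rmult_le_compat_r with (r := cos_h k) in Hlen; [|lra].
    unfold Rdiv in Hlen. rewrite Rmult_assoc, Rinv_l, Rmult_1_r in Hlen by lra. exact Hlen.
Qed.

Theorem mainTheorem10 (k : nat) (hk : (1 <= k)%nat) :
  (forall (P : list point) (u w : point),
     general_position (4 * k + 4) P -> In u P -> In w P ->
     (exists l, routing_path P (4 * k + 4) w u l) /\
     (forall l, routing_path P (4 * k + 4) w u l ->
        path_length l <= ratio_R (4 * k + 4) * pdist u w)) /\
  (forall eps : R, eps > 0 ->
     exists (P : list point) (u w : point),
       general_position (4 * k + 4) P /\ In u P /\ In w P /\ u <> w /\
       exists l, routing_path P (4 * k + 4) w u l /\
         path_length l >= (ratio_R (4 * k + 4) - eps) * pdist u w).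
Proof.
  split.
  - intros P u w HGP Hu Hw. split.
    + exact (routing_path_exists k P w u hk HGP Hw Hu).
    + exact (routing_stretch_le k P u w hk HGP Hu Hw).
  - intros eps Heps. exact (routing_stretch_tight k eps hk Heps).
Qed.
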